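(* Let $M\ge1$. (a) Every irreducible interval other than $[q_G,q_T]$ lies in $I_0=(q_T,M+1]$. (b) For each $n\in\mathbb N$, every $n$-irreducible interval, except the one with right endpoint $q_{n+1}'$, lies in $I_n=(q_{n+1}',q_n']$.
   Context: Order and word operations. Sequences in $\Omega_M=\{0,\dots,M\}^{\mathbb N}$ are ordered lexicographically; words are compared via $\mathbf c\prec\mathbf d$ iff $\mathbf c0^\infty\prec\mathbf d0^\infty$. For a word $c_1\dots c_k$: - $c_1\dots c_k^\pm=c_1\dots c_{k-1}(c_k\pm1)$; - $\overline{c_1\dots c_k}=(M-c_1)\dots(M-c_k)$. Quasi-greedy expansion. For $q\in(1,M+1]$, $\alpha(q)$ is the lexicographically largest $(a_i)\in\Omega_M$ not ending in $0^\infty$ with $\sum a_iq^{-i}=1$. Fundamental words and intervals. A word $a_1\dots a_m$ ($m\ge2$) is fundamental if $\overline{a_1\dots a_{m-i}}\preceq a_{i+1}\dots a_m\prec a_1\dots a_{m-i}$ for $1\le i<m$. When $M\ge2$, a letter $a_1$ is fundamental if $M-a_1\le a_1<M$. $\mathcal A_M$ is the set of fundamental words, and $\mathcal A_1$ is the case $M=1$. For $\mathbf a\in\mathcal A_M$, $J_{\mathbf a}=[q_L(\mathbf a),q_R(\mathbf a)]$ with $\alpha(q_L(\mathbf a))=\mathbf a^\infty$ and $\alpha(q_R(\mathbf a))=\mathbf a^+(\overline{\mathbf a})^\infty$. The graph. Let $G$ have vertices Start, $A$, $B$ and edges - $e_0$: Start$\to A$, - $e_1$: $A\to B$, - $e_2$: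 $B\to B$, - $e_3$: $B\to A$, - $e_4$: $A\to A$. It carries two labelings: - $\mathcal L_{\mathbf a}$: $e_0,e_3\mapsto\mathbf a^+$; $e_1\mapsto\overline{\mathbf a^+}$; $e_2\mapsto\mathbf a$; $e_4\mapsto\overline{\mathbf a}$; - $\mathcal L^*$: $e_0,e_3,e_4\mapsto1$; $e_1,e_2\mapsto0$. Composition. $\Phi_{\mathbf a}$ maps $\mathcal L_{\mathbf a}(e_{i_1})\cdots\mathcal L_{\mathbf a}(e_{i_k})$ (a path with $i_1=0$) to $\mathcal L^*(e_{i_1}\dots e_{i_k})$. For $\mathbf b\in\mathcal A_1$, $\mathbf a\circ\mathbf b:=\Phi_{\mathbf a}^{-1}(\mathbf b)$. $(10)^{\circ k}$ is the $k$-fold composition of $10$ with itself; $(10)^{\circ 0}$ is omitted. Irreducibility. - $\mathbf a\in\mathcal A_M$ is irreducible if there are no $\mathbf c\in\mathcal A_M$, $\mathbf d\in\mathcal A_1$ with $\mathbf a=\mathbf c\circ\mathbf d$. - The unit lift is $\mathbf u=k$ if $M=2k$, and $\mathbf u=(k+1)k$ if $M=2k+1$. - $\mathbf a$ is $n$-irreducible if $\mathbf a=\mathbf u\circ(10)^{\circ(n-1)}\circ\mathbf b$ for some irreducible $\mathbf b\in\mathcal A_1$. - $J_{\mathbf a}$ is an irreducible (resp. $n$-irreducible) interval if $\mathbf a$ is irreducible (resp. $n$-irreducible). Special bases. - $q_G=q_L(\mathbf u)$. - Let $\tau_i$ be the parity of the binary digit sum of $i\ge0$. Put $\lambda_i=k+\tau_i-\tau_{i-1}$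 if $M=2k$, and $\lambda_i=k+\tau_i$ if $M=2k+1$. - For $n\ge1$, $\alpha(q_n')=\lambda_1\dots\lambda_N(\overline{\lambda_1\dots\lambda_N}^+)^\infty$, with $N=2^{n-1}$ for even $M$ and $N=2^n$ for odd $M$. - $q_T=q_1'$, $q_0'=M+1$, and $I_n=(q_{n+1}',q_n']$. *)

(* concrete reals R, words as lists of nat, sequences as nat -> nat
   (0-indexed: position i corresponds to the paper's index i+1). *)
From Stdlib Require Import Reals List Arith PArith NArith.
Import ListNotations.
Open Scope R_scope.

Definition seqn := nat -> nat.

Definition seq_lt (a b : seqn) : Prop :=
  exists n, (forall i, (i < n)%nat -> a i = b i) /\ (a n < b n)%nat.

Definition pad (w : list nat) : seqn := fun i => nth i w 0%nat.

Definition word_lt (c d : list nat) : Prop := seq_lt (pad c) (pad d).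
Definition word_le (c d : list nat) : Prop :=
  word_lt c d \/ (forall i, pad c i = pad d i).

Definition wplus (w : list nat) : list nat :=
  match rev w with [] => [] | x :: r => rev r ++ [S x] end.
Definition wminus (w : list nat) : list nat :=
  match rev w with [] => [] | x :: r => rev r ++ [pred x] end.
Definition wbar (M : nat) (w : list nat) : list nat := map (fun c => M - c)%nat w.

(* periodic sequence w^oo (w nonempty) *)
Definition per (w : list nat) : seqn :=
  fun i => nth (i mod length w) w 0%nat.
Definition pre_per (c d : list nat) : seqn :=
  fun i => if (i <? length c)%nat then nth i c 0%nat
           else nth ((i - length c) mod length d) d 0%nat.

Definition in_Omega (M : nat) (a : seqn) : Prop := forall i, (a i <= M)%nat.
Definition not_end_zero (a : seqn) : Prop := forall n, exists i, (n <= i)%nat /\ a i <> 0%nat.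
Definition is_expansion (q : R) (a : seqn) : Prop :=
  infinite_sum (fun i => INR (a i) / q ^ (S i)) 1.

(* is_alpha M q a  <->  q in (1, M+1] and alpha(q) = a *)
Definition is_alpha (M : nat) (q : R) (a : seqn) : Prop :=
  1 < q <= INR M + 1 /\
  in_Omega M a /\ not_end_zero a /\ is_expansion q a /\
  (forall b, in_Omega M b -> not_end_zero b -> is_expansion q b -> ~ seq_lt a b).

Definition fundamental (M : nat) (a : list nat) : Prop :=
  Forall (fun c => (c <= M)%nat) a /\
  ( (2 <= length a /\
     forall i, (1 <= i < length a)%nat ->
       word_le (wbar M (firstn (length a - i) a)) (skipn i a) /\
       word_lt (skipn i a) (firstn (length a - i) a))
  \/ (2 <= M /\ exists a1, a = [a1] /\ (M - a1 <= a1 < M)%nat) )%nat.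

(* J_a = [x, y]  with  alpha(x) = a^oo  and  alpha(y) = a^+ (abar)^oo *)
Definition is_qL (M : nat) (a : list nat) (x : R) : Prop := is_alpha M x (per a).
Definition is_qR (M : nat) (a : list nat) (y : R) : Prop :=
  is_alpha M y (pre_per (wplus a) (wbar M a)).

Inductive gstate := GStart | GA | GB.

(* Reading b as an L*-labelled path from Start (deterministic), emit the
   L_a-labels of the edges: this is Phi_a^{-1}(b). *)
Fixpoint comp_aux (M : nat) (a : list nat) (s : gstate) (b : list nat)
  : option (list nat) :=
  match b with
  | [] => Some []
  | x :: b' =>
    let step := match s, x with
      | GStart, 1%nat => Some (wplus a, GA)
      | GA, 0%nat => Some (wbar M (wplus a), GB)
      | GB, 0%nat => Some (a, GB)
      | GB, 1%nat => Some (wplus a, GA)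
      | GA, 1%nat => Some (wbar M a, GA)
      | _, _ => None
      end in
    match step with
    | None => None
    | Some (w, s') =>
        match comp_aux M a s' b' with
        | None => None
        | Some r => Some (w ++ r)
        end
    end
  end.

Definition compose (M : nat) (a b : list nat) : option (list nat) :=
  comp_aux M a GStart b.

Definition irreducible (M : nat) (a : list nat) : Prop :=
  ~ exists c d, fundamental M c /\ fundamental 1 d /\ compose M c d = Some a.

Fixpoint comp10_iter (k : nat) (b : list nat) : option (list nat) :=
  match k with
  | 0%nat => Some b
  | S k' => match comp10_iter k' b with
            | None => None
            | Some w => compose 1 [1; 0]%nat w
            end
  end.

Definition unit_lift (M : nat) : list nat :=
  if Nat.even M then [M / 2]%nat else [S (M / 2); M / 2]%nat.

Definition n_irreducible (M n : nat) (a : list nat) : Prop :=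
  exists b w, fundamental 1 b /\ irreducible 1 b /\
    comp10_iter (n - 1) b = Some w /\ compose M (unit_lift M) w = Some a.

Fixpoint popcount (p : positive) : nat :=
  match p with xH => 1 | xO p' => popcount p' | xI p' => S (popcount p') end%nat.
Definition bitsum (i : nat) : nat :=
  match N.of_nat i with N0 => 0%nat | Npos p => popcount p end.
Definition tau (i : nat) : nat := if Nat.odd (bitsum i) then 1%nat else 0%nat.

(* lambda_i for i >= 1 *)
Definition lam (M i : nat) : nat :=
  if Nat.even M then (M / 2 + tau i - tau (i - 1))%nat
  else (M / 2 + tau i)%nat.

Definition lamN (M n : nat) : nat :=
  if Nat.even M then (2 ^ (n - 1))%nat else (2 ^ n)%nat.

Definition lam_word (M n : nat) : list nat :=
  map (fun j => lam M (S j)) (seq 0 (lamN M n)).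

Definition is_qprime (M n : nat) (q : R) : Prop :=
  is_alpha M q (pre_per (lam_word M n) (wplus (wbar M (lam_word M n)))).

(* A base is located through its quasi-greedy expansion: [q |-> alpha(q)] is strictly increasing
   (a larger expansion in a smaller base would contradict maximality), so comparing endpoints of
   intervals reduces to comparing sequences lexicographically.  Composition [c o d] acts on
   sequences as a substitution along the graph G, strictly monotone on binary sequences; it sends
   [alpha(q_L(d))] and [alpha(q_R(d))] to [alpha(q_L(c o d))] and [alpha(q_R(c o d))], and by the
   Thue-Morse recursion for [lambda] it sends [1^oo] under [u o (10)^{o(n-1)}] to [alpha(q_n')].
   The key step is a parsing argument: if a fundamental [a] satisfies
   [a^oo <= alpha(q_T) = u^+ (bar u)^oo], then [a^oo] splits into blocks labelled along G, so
   [a = u o d] with [d] fundamental.  Hence an irreducible [a <> u] has [q_T < q_L(a)], which is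
   (a); (b) follows by pushing the same inequality for [b] through the monotone substitution
   [u o (10)^{o(n-1)}], while [alpha(q_R(b)) <= 1^oo] bounds the right endpoint. *)

From Stdlib Require Import Reals Lra Lia List Arith Classical NArith.
Import ListNotations.
Local Close Scope R_scope.

(** * Lexicographic order *)

Definition seq_eq (s t : seqn) := forall i, s i = t i.
Definition seq_le (s t : seqn) := seq_lt s t \/ seq_eq s t.
Definition shift (k : nat) (s : seqn) : seqn := fun i => s (k + i).
Definition eq_upto (s t : seqn) (n : nat) := forall i, i < n -> s i = t i.
Definition lt_upto (s t : seqn) (n : nat) := exists k, k < n /\ eq_upto s t k /\ s k < t k.
Definition le_upto (s t : seqn) (n : nat) := lt_upto s t n \/ eq_upto s t n.
Definition seq_bar (M : nat) (s : seqn) : seqn := fun i => M - s i.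

Lemma least_witness (P : nat -> Prop) : (exists i, P i) -> exists i, P i /\ forall j, j < i -> ~ P j.
Proof.
  intros [i Hi]. induction i as [i IH] using (well_founded_induction lt_wf).
  destruct (classic (exists j, j < i /\ P j)) as [[j [Hj Pj]]|H].
  - apply (IH j Hj Pj).
  - exists i. split; auto. intros j Hj Pj. apply H. eauto.
Qed.

Lemma eq_upto_mono s t n m : eq_upto s t n -> m <= n -> eq_upto s t m.
Proof. intros H Hm i Hi. apply H. lia. Qed.

Lemma eq_upto_sym s t n : eq_upto s t n -> eq_upto t s n.
Proof. intros H i Hi. symmetry. auto. Qed.

Lemma eq_upto_trans s t u n : eq_upto s t n -> eq_upto t u n -> eq_upto s u n.
Proof. intros H1 H2 i Hi. rewrite H1, H2; auto. Qed.

Lemma lt_upto_trichotomy s t n : lt_upto s t n \/ eq_upto s t n \/ lt_upto t s n.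
Proof.
  destruct (classic (exists i, i < n /\ s i <> t i)) as [H|H].
  - destruct (least_witness _ H) as [k [[Hk Hne] Hmin]].
    assert (Ha : eq_upto s t k).
    { intros i Hi. apply NNPP. intro. apply (Hmin i Hi). split; auto. lia. }
    destruct (Nat.lt_trichotomy (s k) (t k)) as [h|[h|h]]; try lia.
    + left. exists k. auto.
    + right; right. exists k. split; auto. split; auto. apply eq_upto_sym; auto.
  - right; left. intros i Hi. apply NNPP. intro. apply H. eauto.
Qed.

Lemma lt_upto_not_le s t n : lt_upto s t n -> le_upto t s n -> False.
Proof.
  intros [k [Hk [Ha Hl]]] [[k' [Hk' [Ha' Hl']]]|Ha'].
  - destruct (Nat.lt_trichotomy k k') as [h|[h|h]].
    + rewrite Ha' in Hl by auto. lia.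
    + subst. lia.
    + rewrite Ha in Hl' by auto. lia.
  - rewrite Ha' in Hl by auto. lia.
Qed.

Lemma lt_upto_irrefl s n : lt_upto s s n -> False.
Proof. intros [k [_ [_ H]]]. lia. Qed.

Lemma le_upto_trans s t u n : le_upto s t n -> le_upto t u n -> le_upto s u n.
Proof.
  intros [[k [Hk [Ha Hl]]]|Ha] [[k' [Hk' [Ha' Hl']]]|Ha'].
  - left. destruct (Nat.lt_trichotomy k k') as [h|[h|h]].
    + exists k. split; auto. split. intros i Hi. rewrite Ha, Ha'; auto; lia. rewrite <- Ha' by auto. auto.
    + subst. exists k'. split; auto. split. intros i Hi. rewrite Ha, Ha'; auto. lia.
    + exists k'. split; auto. split. intros i Hi. rewrite Ha, Ha'; auto; lia. rewrite Ha by auto. auto.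
  - left. exists k. split; auto. split. intros i Hi. rewrite Ha, Ha'; auto; lia. rewrite <- Ha' by lia. auto.
  - left. exists k'. split; auto. split. intros i Hi. rewrite Ha, Ha'; auto; lia. rewrite Ha by lia. auto.
  - right. eapply eq_upto_trans; eauto.
Qed.

Lemma lt_le_upto_trans s t u n : lt_upto s t n -> le_upto t u n -> lt_upto s u n.
Proof.
  intros H1 H2. destruct (lt_upto_trichotomy s u n) as [h|[h|h]]; auto.
  - exfalso. apply (lt_upto_not_le s t n H1). eapply le_upto_trans. exact H2. right. apply eq_upto_sym; auto.
  - exfalso. apply (lt_upto_not_le s t n H1). eapply le_upto_trans. exact H2. left; auto.
Qed.

Lemma le_upto_mono s t n m : le_upto s t n -> m <= n -> le_upto s t m.
Proof.
  intros [[k [Hk [Ha Hl]]]|Ha] Hm.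
  - destruct (Nat.lt_ge_cases k m). left. exists k; auto. right. eapply eq_upto_mono; eauto.
  - right. eapply eq_upto_mono; eauto.
Qed.

Lemma le_upto_ext s t s' t' n : eq_upto s s' n -> eq_upto t t' n -> le_upto s t n -> le_upto s' t' n.
Proof.
  intros H1 H2 [[k [Hk [Ha Hl]]]|Ha].
  - left. exists k. split; auto. split. intros i Hi. rewrite <- H1, <- H2 by lia. auto.
    rewrite <- H1, <- H2 by lia. auto.
  - right. intros i Hi. rewrite <- H1, <- H2 by lia. auto.
Qed.

Lemma lt_upto_ext s t s' t' n : eq_upto s s' n -> eq_upto t t' n -> lt_upto s t n -> lt_upto s' t' n.
Proof.
  intros H1 H2 [k [Hk [Ha Hl]]].
  exists k. split; auto. split. intros i Hi. rewrite <- H1, <- H2 by lia. auto.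
  rewrite <- H1, <- H2 by lia. auto.
Qed.

Lemma le_upto_of_shift s t k n : eq_upto s t k -> le_upto (shift k s) (shift k t) n -> le_upto s t (k + n).
Proof.
  intros Hk [[j [Hj [Ha Hl]]]|Ha].
  - left. exists (k + j). split. lia. split.
    + intros i Hi. destruct (Nat.lt_ge_cases i k). auto. specialize (Ha (i - k) ltac:(lia)).
      unfold shift in Ha. replace (k + (i - k)) with i in Ha by lia. auto.
    + auto.
  - right. intros i Hi. destruct (Nat.lt_ge_cases i k). auto. specialize (Ha (i - k) ltac:(lia)).
    unfold shift in Ha. replace (k + (i - k)) with i in Ha by lia. auto.
Qed.

Lemma lt_upto_of_shift s t k n : eq_upto s t k -> lt_upto (shift k s) (shift k t) n -> lt_upto s t (k + n).
Proof.
  intros Hk [j [Hj [Ha Hl]]].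
  exists (k + j). split. lia. split.
  + intros i Hi. destruct (Nat.lt_ge_cases i k). auto. specialize (Ha (i - k) ltac:(lia)).
    unfold shift in Ha. replace (k + (i - k)) with i in Ha by lia. auto.
  + auto.
Qed.

Lemma le_upto_shift s t k n : eq_upto s t k -> le_upto s t (k + n) -> le_upto (shift k s) (shift k t) n.
Proof.
  intros Hk H. destruct (lt_upto_trichotomy (shift k s) (shift k t) n) as [h|[h|h]].
  - left; auto.
  - right; auto.
  - exfalso. apply (lt_upto_not_le t s (k + n)). apply lt_upto_of_shift; auto. apply eq_upto_sym; auto. auto.
Qed.

Lemma lt_upto_shift s t k n : eq_upto s t k -> lt_upto s t (k + n) -> lt_upto (shift k s) (shift k t) n.
Proof.
  intros Hk H. destruct (lt_upto_trichotomy (shift k s) (shift k t) n) as [h|[h|h]].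
  - auto.
  - exfalso. apply (lt_upto_not_le s t (k + n) H). right. intros i Hi.
    destruct (Nat.lt_ge_cases i k). symmetry; auto. specialize (h (i - k) ltac:(lia)).
    unfold shift in h. replace (k + (i - k)) with i in h by lia. auto.
  - exfalso. apply (lt_upto_not_le s t (k + n) H). left. apply lt_upto_of_shift; auto. apply eq_upto_sym; auto.
Qed.

Lemma lt_upto_bar M s t n : (forall i, i < n -> s i <= M /\ t i <= M) ->
  lt_upto s t n -> lt_upto (seq_bar M t) (seq_bar M s) n.
Proof.
  intros Hb [k [Hk [Ha Hl]]]. exists k. split; auto. split.
  intros i Hi. unfold seq_bar. rewrite Ha; auto. unfold seq_bar. specialize (Hb k Hk). lia.
Qed.

Lemma le_upto_bar M s t n : (forall i, i < n -> s i <= M /\ t i <= M) ->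
  le_upto s t n -> le_upto (seq_bar M t) (seq_bar M s) n.
Proof.
  intros Hb [H|H]. left. apply lt_upto_bar; auto. right. intros i Hi. unfold seq_bar. rewrite H; auto.
Qed.

Lemma seq_lt_iff_lt_upto s t : seq_lt s t <-> exists n, lt_upto s t n.
Proof.
  split.
  - intros [k [Ha Hl]]. exists (S k). exists k. split. lia. split; auto.
  - intros [n [k [Hk [Ha Hl]]]]. exists k. split; auto.
Qed.

Lemma seq_le_iff_le_upto s t : seq_le s t <-> forall n, le_upto s t n.
Proof.
  split.
  - intros [[k [Ha Hl]]|H] n.
    + destruct (Nat.lt_ge_cases k n). left. exists k. repeat split; auto.
      right. intros i Hi. apply Ha. lia.
    + right. intros i _. auto.
  - intros H. destruct (classic (seq_eq s t)) as [e|e]. right; auto.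
    left. assert (exists i, s i <> t i). { apply NNPP. intro. apply e. intro i. apply NNPP. eauto. }
    destruct H0 as [i Hi]. destruct (H (S i)) as [h|h]. apply seq_lt_iff_lt_upto; eauto.
    exfalso. apply Hi. apply h. lia.
Qed.

Lemma seq_lt_of_lt_upto s t n : lt_upto s t n -> seq_lt s t.
Proof. intros H. apply seq_lt_iff_lt_upto. eauto. Qed.

Lemma le_upto_of_seq_le s t n : seq_le s t -> le_upto s t n.
Proof. intros H. apply seq_le_iff_le_upto. auto. Qed.

Lemma seq_le_head s t : seq_le s t -> s 0 <= t 0.
Proof.
  intros H. destruct (le_upto_of_seq_le s t 1 H) as [[k [Hk [_ Hl]]]|Ha].
  - replace k with 0 in Hl by lia. lia.
  - specialize (Ha 0 ltac:(lia)). lia.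
Qed.

Lemma seq_trichotomy s t : seq_lt s t \/ seq_eq s t \/ seq_lt t s.
Proof.
  destruct (classic (seq_eq s t)) as [e|e]. auto.
  assert (exists i, s i <> t i). { apply NNPP. intro. apply e. intro i. apply NNPP. eauto. }
  destruct H as [i Hi]. destruct (lt_upto_trichotomy s t (S i)) as [h|[h|h]].
  left. apply seq_lt_iff_lt_upto; eauto. exfalso. apply Hi, h. lia. right; right. apply seq_lt_iff_lt_upto; eauto.
Qed.

Lemma seq_le_trans s t u : seq_le s t -> seq_le t u -> seq_le s u.
Proof. rewrite !seq_le_iff_le_upto. intros H1 H2 n. eapply le_upto_trans; eauto. Qed.

Lemma seq_lt_not_le s t : seq_lt s t -> seq_le t s -> False.
Proof. rewrite seq_le_iff_le_upto, seq_lt_iff_lt_upto. intros [n H1] H2. eapply lt_upto_not_le; eauto. Qed.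

Lemma seq_le_ext s t s' t' : seq_eq s s' -> seq_eq t t' -> seq_le s t -> seq_le s' t'.
Proof. rewrite !seq_le_iff_le_upto. intros H1 H2 H n. apply (le_upto_ext s t); auto; intros i _; auto. Qed.

Lemma seq_lt_ext s t s' t' : seq_eq s s' -> seq_eq t t' -> seq_lt s t -> seq_lt s' t'.
Proof. rewrite !seq_lt_iff_lt_upto. intros H1 H2 [n H]. exists n. apply (lt_upto_ext s t); auto; intros i _; auto. Qed.

Lemma seq_not_lt_le s t : ~ seq_lt t s -> seq_le s t.
Proof.
  intros H. destruct (seq_trichotomy s t) as [h|[h|h]]. left; auto. right; auto. contradiction.
Qed.

Lemma seq_le_shift s t k : eq_upto s t k -> seq_le s t -> seq_le (shift k s) (shift k t).
Proof. rewrite !seq_le_iff_le_upto. intros Ha H n. apply le_upto_shift; auto. Qed.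

Lemma seq_le_bar M s t : (forall i, s i <= M /\ t i <= M) -> seq_le s t -> seq_le (seq_bar M t) (seq_bar M s).
Proof. rewrite !seq_le_iff_le_upto. intros Hb H n. apply le_upto_bar; auto. Qed.

(** * Quasi-greedy expansions *)

Section Expansions.
Local Open Scope R_scope.

Definition digit_term (q : R) (s : seqn) (i : nat) : R := INR (s i) / q ^ S i.

Lemma digit_term_nonneg q s i : 0 < q -> 0 <= digit_term q s i.
Proof.
  intros Hq. unfold digit_term, Rdiv. apply Rmult_le_pos; [apply pos_INR|].
  left. apply Rinv_0_lt_compat, pow_lt, Hq.
Qed.

Lemma digit_term_pos q s i : 0 < q -> s i <> 0%nat -> 0 < digit_term q s i.
Proof.
  intros Hq Hs. apply Rdiv_lt_0_compat; [apply lt_0_INR; lia | apply pow_lt, Hq].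
Qed.

Lemma sum_f_R0_mono f n m :
  (forall i, 0 <= f i) -> (n <= m)%nat -> sum_f_R0 f n <= sum_f_R0 f m.
Proof.
  intros Hf H. induction H; [lra|]. rewrite tech5. specialize (Hf (S m)). lra.
Qed.

Lemma sum_f_R0_add_term f n j :
  (forall i, 0 <= f i) -> (n < j)%nat -> sum_f_R0 f n + f j <= sum_f_R0 f j.
Proof.
  intros Hf H. destruct j as [|j]; [lia|]. rewrite tech5.
  pose proof (sum_f_R0_mono f n j Hf ltac:(lia)). lra.
Qed.

Lemma infinite_sum_le f l n0 c :
  infinite_sum f l -> (forall N, (n0 <= N)%nat -> sum_f_R0 f N <= c) -> l <= c.
Proof.
  intros Hl H. destruct (Rle_dec l c) as [|Hlc]; [assumption|exfalso].
  destruct (Hl (l - c)) as [N0 HN0]; [lra|].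
  specialize (HN0 (max n0 N0) ltac:(lia)). specialize (H (max n0 N0) ltac:(lia)).
  unfold R_dist in HN0. apply Rabs_def2 in HN0. lra.
Qed.

Lemma psum_anti q1 q2 s n :
  0 < q2 <= q1 -> sum_f_R0 (digit_term q1 s) n <= sum_f_R0 (digit_term q2 s) n.
Proof.
  intros Hq. apply sum_growing. intro i. unfold digit_term, Rdiv.
  apply Rmult_le_compat_l; [apply pos_INR|].
  apply Rinv_le_contravar; [apply pow_lt; lra | apply pow_incr; lra].
Qed.

Lemma psum_lt_prefix q s s' n : 0 < q ->
  (forall i, (i < n)%nat -> s i = s' i) -> (s n < s' n)%nat ->
  sum_f_R0 (digit_term q s) n + 1 / q ^ S n <= sum_f_R0 (digit_term q s') n.
Proof.
  intros Hq Heq Hlt.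
  assert (Hlast : digit_term q s n + 1 / q ^ S n <= digit_term q s' n).
  { unfold digit_term. rewrite <- Rdiv_plus_distr. unfold Rdiv.
    apply Rmult_le_compat_r; [left; apply Rinv_0_lt_compat, pow_lt; lra|].
    rewrite <- S_INR. apply le_INR. lia. }
  destruct n as [|n]; [simpl sum_f_R0; lra|].
  rewrite !tech5, (sum_eq (digit_term q s) (digit_term q s') n); [lra|].
  intros i Hi. unfold digit_term. rewrite Heq by lia. reflexivity.
Qed.

Lemma expansion_psum_lt_1 q s n :
  1 < q -> not_end_zero s -> is_expansion q s -> sum_f_R0 (digit_term q s) n < 1.
Proof.
  intros Hq Hs He. destruct (Hs (S n)) as [j [Hj Hsj]].
  pose proof (sum_f_R0_add_term (digit_term q s) n j
                (fun i => digit_term_nonneg q s i ltac:(lra)) ltac:(lia)).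
  pose proof (sum_incr (digit_term q s) j 1 He (fun i => digit_term_nonneg q s i ltac:(lra))).
  pose proof (digit_term_pos q s j ltac:(lra) Hsj). lra.
Qed.

(* [INR M / (q ^ S n * (q - 1))] is the largest possible value of a tail after position [n]. *)
Lemma psum_tail_le M q s n j : 1 < q -> in_Omega M s ->
  sum_f_R0 (digit_term q s) (n + j) + INR M / (q ^ S (n + j) * (q - 1))
  <= sum_f_R0 (digit_term q s) n + INR M / (q ^ S n * (q - 1)).
Proof.
  intros Hq Hs. induction j; [rewrite Nat.add_0_r; lra|].
  rewrite Nat.add_succ_r, tech5.
  assert (Hp : 0 < q ^ S (n + j)) by (apply pow_lt; lra).
  assert (Hd : INR (s (S (n + j))) <= INR M) by apply le_INR, Hs.
  unfold digit_term in *. change (q ^ S (S (n + j))) with (q * q ^ S (n + j)).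
  assert (INR M / (q * q ^ S (n + j) * (q - 1)) + INR M / (q * q ^ S (n + j))
          = INR M / (q ^ S (n + j) * (q - 1))) by (field; split; lra).
  assert (INR (s (S (n + j))) / (q * q ^ S (n + j)) <= INR M / (q * q ^ S (n + j))).
  { unfold Rdiv. apply Rmult_le_compat_r; [|exact Hd]. left. apply Rinv_0_lt_compat. nra. }
  lra.
Qed.

Lemma expansion_tail_bound M q s n : 1 < q -> in_Omega M s -> is_expansion q s ->
  1 <= sum_f_R0 (digit_term q s) n + INR M / (q ^ S n * (q - 1)).
Proof.
  intros Hq Hs He. change (infinite_sum (digit_term q s) 1) in He.
  apply (infinite_sum_le _ 1 n _ He). intros N HN.
  pose proof (psum_tail_le M q s n (N - n) Hq Hs) as Ht.
  replace (n + (N - n))%nat with N in Ht by lia.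
  assert (0 <= INR M / (q ^ S N * (q - 1))).
  { unfold Rdiv. apply Rmult_le_pos; [apply pos_INR|].
    left. apply Rinv_0_lt_compat, Rmult_lt_0_compat; [apply pow_lt|]; lra. }
  lra.
Qed.

Fixpoint digit_below (d : nat) (x : R) : nat :=
  match d with
  | O => O
  | S d' => if Rlt_dec (INR (S d')) x then S d' else digit_below d' x
  end.

Lemma digit_below_le d x : (digit_below d x <= d)%nat.
Proof. induction d; simpl; [lia|]. destruct Rlt_dec; lia. Qed.

Lemma digit_below_lt d x : digit_below d x = 0%nat \/ INR (digit_below d x) < x.
Proof. induction d; simpl; auto. destruct Rlt_dec; auto. Qed.

Lemma digit_below_succ d x : (digit_below d x < d)%nat -> x <= INR (S (digit_below d x)).
Proof.
  induction d; simpl; [lia|]. destruct Rlt_dec; [lia|].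
  intros _. destruct (Nat.eq_dec (digit_below d x) d) as [e|e]; [rewrite e; lra|].
  apply IHd. pose proof (digit_below_le d x). lia.
Qed.

Section GreedyCompletion.
Variables (M : nat) (q : R) (p : seqn) (n : nat).

Definition next_digit (i : nat) (r : R) : nat :=
  if (i <=? n)%nat then p i else digit_below M (q * r).

(* [greedy_rem i = q ^ i * (1 - sum_{k < i} greedy_digit k / q ^ (k + 1))] *)
Fixpoint greedy_rem (i : nat) : R :=
  match i with
  | O => 1
  | S i' => q * greedy_rem i' - INR (next_digit i' (greedy_rem i'))
  end.

Definition greedy_digit (i : nat) : nat := next_digit i (greedy_rem i).

Hypothesis Hq : 1 < q.
Hypothesis HqM : q <= INR M + 1.

Lemma greedy_psum N :
  sum_f_R0 (digit_term q greedy_digit) N = 1 - greedy_rem (S N) / q ^ S N.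
Proof.
  assert (q <> 0) by lra. unfold digit_term.
  induction N.
  - simpl sum_f_R0. change (greedy_rem 1) with (q * 1 - INR (greedy_digit 0)). field. exact H.
  - rewrite tech5, IHN. change (greedy_rem (S (S N)))
      with (q * greedy_rem (S N) - INR (greedy_digit (S N))).
    assert (q ^ S N <> 0) by (apply pow_nonzero; lra).
    change (q ^ S (S N)) with (q * q ^ S N). field. auto.
Qed.

Let B := INR M / (q - 1).

Lemma greedy_bound_ge1 : 1 <= B.
Proof. unfold B. apply (Rmult_le_reg_r (q - 1)); [lra|]. field_simplify; lra. Qed.

Lemma greedy_rem_bound i : (n < i)%nat -> 0 < greedy_rem i <= B -> 0 < greedy_rem (S i) <= B.
Proof.
  intros Hi [H1 H2]. change (greedy_rem (S i)) with (q * greedy_rem i - INR (greedy_digit i)).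
  unfold greedy_digit, next_digit. destruct (Nat.leb_spec i n); [lia|].
  set (x := q * greedy_rem i). assert (0 < x) by (unfold x; nra).
  pose proof greedy_bound_ge1.
  destruct (digit_below_lt M x) as [e|e].
  - rewrite e. simpl. split; [lra|].
    assert (HM : (0 < M)%nat) by (destruct M; [simpl in HqM; lra | lia]).
    pose proof (digit_below_succ M x ltac:(lia)) as Hs. rewrite e in Hs. simpl in Hs. lra.
  - split; [lra|].
    destruct (Nat.eq_dec (digit_below M x) M) as [e2|e2].
    + rewrite e2. unfold x.
      assert (q * B - INR M = B) by (unfold B; field; lra). nra.
    + pose proof (digit_below_le M x).
      pose proof (digit_below_succ M x ltac:(lia)) as Hs. rewrite S_INR in Hs. lra.
Qed.

Hypothesis Hrem : 0 < greedy_rem (S n) <= B.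

Lemma greedy_rem_bound_all j : 0 < greedy_rem (S n + j) <= B.
Proof.
  induction j; [rewrite Nat.add_0_r; auto|].
  rewrite Nat.add_succ_r. apply greedy_rem_bound; [lia | exact IHj].
Qed.

Lemma greedy_expansion : is_expansion q greedy_digit.
Proof.
  intros eps Heps. fold (digit_term q greedy_digit).
  assert (HB : 0 < B) by (pose proof greedy_bound_ge1; lra).
  destruct (pow_lt_1_zero (/ q)) with (y := eps / B) as [N0 HN0].
  { rewrite Rabs_pos_eq; [|left; apply Rinv_0_lt_compat; lra].
    rewrite <- Rinv_1. apply Rinv_1_lt_contravar; lra. }
  { apply Rdiv_lt_0_compat; lra. }
  exists (max N0 n). intros m Hm. unfold R_dist. rewrite greedy_psum.
  replace (1 - greedy_rem (S m) / q ^ S m - 1) with (- (greedy_rem (S m) / q ^ S m)) by ring.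
  rewrite Rabs_Ropp.
  assert (Hr : 0 < greedy_rem (S m) <= B).
  { replace (S m) with (S n + (m - n))%nat by lia. apply greedy_rem_bound_all. }
  specialize (HN0 (S m) ltac:(lia)). rewrite pow_inv in HN0.
  assert (0 < q ^ S m) by (apply pow_lt; lra).
  rewrite Rabs_pos_eq in HN0 by (left; apply Rinv_0_lt_compat; auto).
  rewrite Rabs_pos_eq by (left; apply Rdiv_lt_0_compat; lra).
  unfold Rdiv. apply Rle_lt_trans with (B * / q ^ S m).
  - apply Rmult_le_compat_r; [left; apply Rinv_0_lt_compat; auto | lra].
  - apply (Rmult_lt_compat_l B) in HN0; [|exact HB].
    replace (B * (eps / B)) with eps in HN0 by (field; lra). lra.
Qed.

(* A remainder that is never reduced grows like [q ^ j] and leaves (0, B]. *)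
Lemma greedy_not_end_zero : not_end_zero greedy_digit.
Proof.
  intros N. apply NNPP. intro Hc.
  assert (Hz : forall i, (N <= i)%nat -> greedy_digit i = 0%nat).
  { intros i Hi. apply NNPP. intro. apply Hc. exists i; auto. }
  set (N' := (S n + N)%nat).
  assert (Hg : forall j, greedy_rem (N' + j) = q ^ j * greedy_rem N').
  { induction j; [rewrite Nat.add_0_r; simpl; ring|].
    rewrite Nat.add_succ_r. change (greedy_rem (S (N' + j)))
      with (q * greedy_rem (N' + j) - INR (greedy_digit (N' + j))).
    rewrite Hz by (unfold N'; lia). rewrite IHj. simpl. ring. }
  assert (H0 : 0 < greedy_rem N' <= B) by apply greedy_rem_bound_all.
  destruct (Pow_x_infinity q) with (b := B / greedy_rem N' + 1) as [J HJ].
  { rewrite Rabs_pos_eq; lra. }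
  specialize (HJ J (le_n _)). rewrite Rabs_pos_eq in HJ by (apply pow_le; lra).
  assert (HH : 0 < greedy_rem (N' + J) <= B).
  { unfold N'. rewrite <- Nat.add_assoc. apply greedy_rem_bound_all. }
  rewrite Hg in HH.
  assert (q ^ J * greedy_rem N' >= (B / greedy_rem N' + 1) * greedy_rem N')
    by (apply Rmult_ge_compat_r; lra).
  replace ((B / greedy_rem N' + 1) * greedy_rem N') with (B + greedy_rem N') in H
    by (field; lra). lra.
Qed.

End GreedyCompletion.

Lemma expansion_completion M q p n : 1 < q <= INR M + 1 ->
  (forall i, (i <= n)%nat -> (p i <= M)%nat) ->
  0 < 1 - sum_f_R0 (digit_term q p) n <= INR M / (q ^ S n * (q - 1)) ->
  exists b, in_Omega M b /\ not_end_zero b /\ is_expansion q b /\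
    forall i, (i <= n)%nat -> b i = p i.
Proof.
  intros [Hq HqM] Hp HP.
  assert (Hqn : 0 < q ^ S n) by (apply pow_lt; lra).
  assert (Hprefix : forall i, (i <= n)%nat -> greedy_digit M q p n i = p i).
  { intros i Hi. unfold greedy_digit, next_digit. destruct (Nat.leb_spec i n); [auto | lia]. }
  assert (Hrem : 0 < greedy_rem M q p n (S n) <= INR M / (q - 1)).
  { pose proof (greedy_psum M q p n Hq n) as Hs.
    rewrite (sum_eq _ (digit_term q p)) in Hs
      by (intros i Hi; unfold digit_term; rewrite Hprefix; auto).
    assert (E : greedy_rem M q p n (S n) = q ^ S n * (1 - sum_f_R0 (digit_term q p) n))
      by (rewrite Hs; field; lra).
    rewrite E. split; [apply Rmult_lt_0_compat; lra|].
    destruct HP as [_ HP]. apply (Rmult_le_compat_l (q ^ S n)) in HP; [|lra].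
    replace (q ^ S n * (INR M / (q ^ S n * (q - 1)))) with (INR M / (q - 1)) in HP
      by (field; lra). exact HP. }
  exists (greedy_digit M q p n). split; [|split; [|split]].
  - intro i. unfold greedy_digit, next_digit.
    destruct (Nat.leb_spec i n); [apply Hp; lia | apply digit_below_le].
  - apply greedy_not_end_zero; auto.
  - apply greedy_expansion; auto.
  - exact Hprefix.
Qed.

Lemma is_alpha_lt M q1 q2 s s' : is_alpha M q1 s -> is_alpha M q2 s' -> seq_lt s s' -> q1 < q2.
Proof.
  intros [Hq1 [Ho1 [Hn1 [He1 Hmax1]]]] [Hq2 [Ho2 [Hn2 [He2 _]]]] [n [Heq Hlt]].
  destruct (Rlt_or_le q1 q2) as [|Hle]; [assumption | exfalso].
  assert (HP1 : sum_f_R0 (digit_term q1 s') n < 1).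
  { apply Rle_lt_trans with (sum_f_R0 (digit_term q2 s') n);
      [apply psum_anti; lra | apply expansion_psum_lt_1; auto; lra]. }
  pose proof (psum_lt_prefix q1 s s' n ltac:(lra) Heq Hlt) as Hstep.
  pose proof (expansion_tail_bound M q1 s n ltac:(lra) Ho1 He1) as Htail.
  assert (0 < 1 / q1 ^ S n) by (apply Rdiv_lt_0_compat; [lra | apply pow_lt; lra]).
  destruct (expansion_completion M q1 s' n Hq1 (fun i _ => Ho2 i) ltac:(lra))
    as [b [Hob [Hnb [Heb Hpb]]]].
  apply (Hmax1 b Hob Hnb Heb). exists n. split.
  - intros i Hi. rewrite Hpb by lia. auto.
  - rewrite Hpb by lia. exact Hlt.
Qed.

Lemma expansion_base_unique q1 q2 s : 1 < q1 -> 1 < q2 -> not_end_zero s ->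
  is_expansion q1 s -> is_expansion q2 s -> q1 = q2.
Proof.
  assert (Hlt : forall r1 r2, 1 < r1 -> r1 < r2 -> not_end_zero s ->
                 is_expansion r1 s -> is_expansion r2 s -> False).
  { clear q1 q2. intros q1 q2 Hq1 Hq Hs He1 He2.
    set (f := fun i => digit_term q1 s i - digit_term q2 s i).
    assert (Hf : infinite_sum f (1 - 1)).
    { intros eps Heps. destruct (CV_minus _ _ 1 1 He1 He2 eps Heps) as [N HN].
      exists N. intros n Hn. unfold f. rewrite minus_sum. apply HN; auto. }
    assert (Hterm : forall i, 0 <= f i /\ (s i <> 0%nat -> 0 < f i)).
    { intro i. unfold f, digit_term, Rdiv. rewrite <- Rmult_minus_distr_l.
      assert (/ q2 ^ S i < / q1 ^ S i).
      { apply Rinv_lt_contravar; [apply Rmult_lt_0_compat; apply pow_lt; lra|].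
        simpl. assert (q1 ^ i <= q2 ^ i) by (apply pow_incr; lra).
        assert (0 < q1 ^ i) by (apply pow_lt; lra). nra. }
      split; [apply Rmult_le_pos; [apply pos_INR | lra]|].
      intros Hsi. apply Rmult_lt_0_compat; [apply lt_0_INR; lia | lra]. }
    destruct (Hs 1%nat) as [j [Hj Hsj]].
    pose proof (sum_f_R0_add_term f 0 j (fun i => proj1 (Hterm i)) ltac:(lia)).
    pose proof (sum_incr f j _ Hf (fun i => proj1 (Hterm i))).
    pose proof (proj1 (Hterm 0%nat)). pose proof (proj2 (Hterm j) Hsj). simpl in *. lra. }
  intros Hq1 Hq2 Hs He1 He2. destruct (Rtotal_order q1 q2) as [h|[h|h]]; auto; exfalso.
  - exact (Hlt q1 q2 Hq1 h Hs He1 He2).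
  - exact (Hlt q2 q1 Hq2 h Hs He2 He1).
Qed.

Lemma is_alpha_inj M q1 q2 s s' :
  is_alpha M q1 s -> is_alpha M q2 s' -> (forall i, s i = s' i) -> q1 = q2.
Proof.
  intros [Hq1 [_ [Hn1 [He1 _]]]] [Hq2 [_ [_ [He2 _]]]] Heq.
  apply (expansion_base_unique q1 q2 s); try lra; auto.
  intros eps Heps. destruct (He2 eps Heps) as [N HN]. exists N. intros n Hn.
  rewrite (sum_eq _ (fun i => INR (s' i) / q2 ^ S i)); [auto|].
  intros i _. rewrite Heq. reflexivity.
Qed.

Lemma is_alpha_le M q1 q2 s s' : is_alpha M q1 s -> is_alpha M q2 s' -> seq_le s s' -> q1 <= q2.
Proof.
  intros H1 H2 [H|H]; [left; exact (is_alpha_lt M q1 q2 s s' H1 H2 H)|].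
  right. exact (is_alpha_inj M q1 q2 s s' H1 H2 H).
Qed.

End Expansions.

(** * Words and the substitution along G *)

Lemma nth_map_seq (f : nat -> nat) n i : i < n -> nth i (map f (seq 0 n)) 0 = f i.
Proof.
  intros H. rewrite (nth_indep _ 0 (f 0)) by (rewrite length_map, length_seq; auto).
  rewrite map_nth, seq_nth; auto.
Qed.

Lemma Forall_le1_of_nth l : (forall i, i < length l -> nth i l 0 <= 1) -> Forall (fun x => x <= 1) l.
Proof.
  induction l; intros H; constructor. apply (H 0); simpl; lia.
  apply IHl. intros i Hi. apply (H (S i)). simpl; lia.
Qed.

Lemma nth_le1_of_Forall d : Forall (fun x => x <= 1) d -> forall j, nth j d 0 <= 1.
Proof.
  intros H j. revert j. induction H; intros j; destruct j; simpl; try lia; auto.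
Qed.

Lemma wplus_app l x : wplus (l ++ [x]) = l ++ [S x].
Proof. unfold wplus. rewrite rev_app_distr. simpl. rewrite rev_involutive. auto. Qed.

Lemma wplus_length c : length (wplus c) = length c.
Proof.
  destruct c as [|x c] using rev_ind. auto. rewrite wplus_app, !length_app. auto.
Qed.

Lemma wplus_nth c t : c <> [] -> nth t (wplus c) 0 =
  if t =? length c - 1 then S (nth t c 0) else nth t c 0.
Proof.
  intros Hc. destruct c as [|x c] using rev_ind. congruence. clear IHc.
  rewrite wplus_app, length_app. simpl.
  destruct (Nat.eqb_spec t (length c + 1 - 1)).
  - subst. replace (length c + 1 - 1) with (length c) by lia. rewrite !app_nth2 by lia.
    rewrite Nat.sub_diag. auto.
  - destruct (Nat.lt_ge_cases t (length c)). rewrite !app_nth1 by lia. auto.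
    rewrite !app_nth2 by lia. destruct (t - length c) eqn:E. lia. simpl. destruct n0; auto.
Qed.

Lemma wbar_length M c : length (wbar M c) = length c.
Proof. unfold wbar. apply length_map. Qed.

Lemma wbar_nth M c t : t < length c -> nth t (wbar M c) 0 = M - nth t c 0.
Proof.
  intros H. unfold wbar. rewrite (nth_indep _ 0 (M - 0)). apply (map_nth (fun x => M - x)).
  rewrite length_map; auto.
Qed.

Lemma wplus_wbar_wplus M a : a <> [] -> nth (length a - 1) a 0 < M -> wplus (wbar M (wplus a)) = wbar M a.
Proof.
  intros Hne Hl. destruct a as [|x a] using rev_ind. congruence. clear IHa.
  rewrite wplus_app. unfold wbar. rewrite !map_app. simpl. rewrite wplus_app.
  rewrite length_app in Hl. simpl in Hl. replace (length a + 1 - 1) with (length a) in Hl by lia.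
  rewrite app_nth2 in Hl by lia. rewrite Nat.sub_diag in Hl. simpl in Hl.
  f_equal. f_equal. lia.
Qed.

Definition right_seq (M : nat) (a : list nat) : seqn := pre_per (wplus a) (wbar M a).

Lemma right_seq_head M a i : i < length a -> right_seq M a i = nth i (wplus a) 0.
Proof.
  intros H. unfold right_seq, pre_per. rewrite wplus_length.
  destruct (Nat.ltb_spec i (length a)); [reflexivity | lia].
Qed.

Lemma right_seq_tail M a i : a <> [] -> right_seq M a (length a + i) = M - per a i.
Proof.
  intros Ha. unfold right_seq, pre_per, per. rewrite wplus_length, wbar_length.
  destruct (Nat.ltb_spec (length a + i) (length a)); [lia|].
  replace (length a + i - length a) with i by lia.
  apply wbar_nth, Nat.mod_upper_bound. destruct a; [congruence | simpl; lia].
Qed.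

Definition binary (D : seqn) := forall j, D j <= 1.
Definition ones : seqn := fun _ => 1.

Section Substitution.
Variables (M : nat) (c : list nat).

(* [block p x] is the [L_c]-label of the edge of G read on bit [x] from the state reached after
   bit [p] (A iff [p = 1], the start state behaving like B); [subst p0 D] concatenates these
   labels along [D], a sequence-level [Phi_c^{-1}]. *)
Definition block (p x : nat) : list nat :=
  if x =? 0 then (if p =? 0 then c else wbar M (wplus c))
  else (if p =? 0 then wplus c else wbar M c).

Definition prev_bit (p0 : nat) (D : seqn) (j : nat) : nat :=
  match j with 0 => p0 | S j' => D j' end.

Let L := length c.

Definition subst (p0 : nat) (D : seqn) : seqn :=
  fun i => nth (i mod L) (block (prev_bit p0 D (i / L)) (D (i / L))) 0.

(* The last letter of [c] can be raised, so [wplus c] is again a word over {0..M}. *)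
Definition admissible := 0 < L /\ (forall t, t < L -> nth t c 0 <= M) /\ nth (L - 1) c 0 < M.

Lemma block_nth p x t : c <> [] -> t < L -> x <= 1 -> p <= 1 ->
  nth t (block p x) 0 =
  if p =? 0 then nth t c 0 + x * Nat.b2n (t =? L - 1)
  else M - nth t c 0 - (1 - x) * Nat.b2n (t =? L - 1).
Proof.
  intros Hc Ht Hx Hp. unfold block.
  destruct (Nat.eqb_spec x 0); destruct (Nat.eqb_spec p 0); subst.
  - simpl. lia.
  - rewrite wbar_nth by (rewrite wplus_length; auto). rewrite wplus_nth by auto.
    fold L. destruct (t =? L - 1); simpl; lia.
  - rewrite wplus_nth by auto. fold L. replace x with 1 by lia. destruct (t =? L - 1); simpl; lia.
  - rewrite wbar_nth by auto. replace x with 1 by lia. simpl. lia.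
Qed.

Lemma block_length p x : length (block p x) = L.
Proof. unfold block. destruct (x =? 0), (p =? 0); rewrite ?wbar_length, ?wplus_length; auto. Qed.

Hypothesis Hv : admissible.

Lemma admissible_nonnil : c <> [].
Proof. destruct Hv as [H _]. intro e. unfold L in H. rewrite e in H. simpl in H. lia. Qed.

Lemma admissible_length_pos : 0 < L.
Proof. apply Hv. Qed.

Lemma div_mod_block j t : t < L -> (L * j + t) / L = j /\ (L * j + t) mod L = t.
Proof.
  intros Ht. pose proof admissible_length_pos. split.
  - symmetry. apply (Nat.div_unique _ _ _ t); auto.
  - symmetry. apply (Nat.mod_unique _ _ j); auto.
Qed.

Lemma subst_block p0 D j t : t < L -> subst p0 D (L * j + t) = nth t (block (prev_bit p0 D j) (D j)) 0.
Proof. intros Ht. unfold subst. destruct (div_mod_block j t Ht) as [e1 e2]. rewrite e1, e2. auto. Qed.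

Lemma block_decomp i : exists j t, t < L /\ i = L * j + t.
Proof.
  pose proof admissible_length_pos. exists (i / L), (i mod L). split. apply Nat.mod_upper_bound; lia.
  apply Nat.div_mod; lia.
Qed.

Lemma subst_shift p0 D m i : subst p0 D (L * m + i) = subst (prev_bit p0 D m) (shift m D) i.
Proof.
  destruct (block_decomp i) as [j [t [Ht ->]]].
  replace (L * m + (L * j + t)) with (L * (m + j) + t) by lia.
  rewrite !subst_block by auto. unfold shift. f_equal. f_equal.
  destruct j. rewrite Nat.add_0_r. auto. simpl. rewrite Nat.add_succ_r. auto.
Qed.

Lemma subst_bar p0 D : binary D -> p0 <= 1 ->
  seq_eq (subst (1 - p0) (fun j => 1 - D j)) (seq_bar M (subst p0 D)).
Proof.
  intros HD Hp i. destruct (block_decomp i) as [j [t [Ht ->]]]. unfold seq_bar.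
  rewrite !subst_block by auto.
  assert (Hpr : prev_bit (1 - p0) (fun j => 1 - D j) j = 1 - prev_bit p0 D j) by (destruct j; auto).
  assert (Hpl : prev_bit p0 D j <= 1) by (destruct j; simpl; auto).
  rewrite Hpr. pose proof admissible_nonnil. specialize (HD j).
  rewrite !block_nth by (auto; lia).
  destruct Hv as [_ [Hc Hl]]. specialize (Hc t Ht).
  remember (prev_bit p0 D j) as P. remember (D j) as X.
  assert (HP : P = 0 \/ P = 1) by lia. assert (HX : X = 0 \/ X = 1) by lia.
  destruct (Nat.eqb_spec t (L - 1)) as [e|e].
  - subst t. destruct HP as [-> | ->]; destruct HX as [-> | ->]; simpl; lia.
  - destruct HP as [-> | ->]; destruct HX as [-> | ->]; simpl; lia.
Qed.

Lemma block_eq_upto_last p t : p <= 1 -> t < L - 1 -> nth t (block p 0) 0 = nth t (block p 1) 0.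
Proof.
  intros Hp Ht. pose proof admissible_nonnil. rewrite !block_nth by (auto; lia).
  destruct (Nat.eqb_spec t (L - 1)). lia. simpl. lia.
Qed.

Lemma block_last_lt p : p <= 1 -> nth (L - 1) (block p 0) 0 < nth (L - 1) (block p 1) 0.
Proof.
  intros Hp. pose proof admissible_nonnil. pose proof admissible_length_pos. rewrite !block_nth by (auto; lia).
  rewrite Nat.eqb_refl. simpl. destruct Hv as [_ [_ Hl]].
  destruct (Nat.eqb_spec p 0); lia.
Qed.

Lemma subst_eq_upto p0 D D' n : eq_upto D D' n -> eq_upto (subst p0 D) (subst p0 D') (L * n).
Proof.
  intros Ha i Hi. destruct (block_decomp i) as [j [t [Ht ->]]].
  assert (j < n) by nia. rewrite !subst_block by auto.
  rewrite Ha by auto. f_equal. f_equal. destruct j; simpl; auto. apply Ha. lia.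
Qed.

Lemma subst_lt_upto p0 D D' n : p0 <= 1 -> binary D -> binary D' ->
  lt_upto D D' n -> lt_upto (subst p0 D) (subst p0 D') (L * n).
Proof.
  intros Hp HD HD' [k [Hk [Ha Hl]]]. pose proof admissible_length_pos.
  assert (HDk : D k = 0) by (specialize (HD' k); lia).
  assert (HDk' : D' k = 1) by (specialize (HD' k); lia).
  assert (Hpk : prev_bit p0 D k = prev_bit p0 D' k) by (destruct k; simpl; auto).
  assert (Hpk1 : prev_bit p0 D k <= 1) by (destruct k; simpl; auto).
  exists (L * k + (L - 1)). split. nia. split.
  - intros i Hi. destruct (block_decomp i) as [j [t [Ht ->]]].
    rewrite !subst_block by auto.
    destruct (Nat.lt_ge_cases j k).
    + rewrite Ha by auto. f_equal. f_equal. destruct j; simpl; auto. apply Ha. lia.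
    + assert (j = k) by nia. subst j. assert (t < L - 1) by nia.
      rewrite Hpk, HDk, HDk'. apply block_eq_upto_last; auto. lia.
  - rewrite !subst_block by lia. rewrite Hpk, HDk, HDk'. apply block_last_lt. lia.
Qed.

Lemma lt_upto_of_subst p0 D D' n : p0 <= 1 -> binary D -> binary D' ->
  lt_upto (subst p0 D) (subst p0 D') (L * n) -> lt_upto D D' n.
Proof.
  intros Hp HD HD' H. destruct (lt_upto_trichotomy D D' n) as [h|[h|h]]; auto; exfalso.
  - apply (lt_upto_irrefl (subst p0 D) (L * n)). eapply lt_le_upto_trans. exact H.
    right. apply eq_upto_sym, subst_eq_upto; auto.
  - apply (lt_upto_not_le _ _ _ H). left. apply subst_lt_upto; auto.
Qed.

Lemma le_upto_of_subst p0 D D' n : p0 <= 1 -> binary D -> binary D' ->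
  le_upto (subst p0 D) (subst p0 D') (L * n) -> le_upto D D' n.
Proof.
  intros Hp HD HD' H. destruct (lt_upto_trichotomy D D' n) as [h|[h|h]]. left; auto. right; auto.
  exfalso. apply (lt_upto_not_le (subst p0 D') (subst p0 D) (L * n)). apply subst_lt_upto; auto. auto.
Qed.

Lemma subst_seq_lt p0 D D' : p0 <= 1 -> binary D -> binary D' -> seq_lt D D' -> seq_lt (subst p0 D) (subst p0 D').
Proof.
  intros Hp HD HD'. rewrite !seq_lt_iff_lt_upto. intros [n H]. exists (L * n). apply subst_lt_upto; auto.
Qed.

Lemma subst_ext p0 D D' : seq_eq D D' -> seq_eq (subst p0 D) (subst p0 D').
Proof.
  intros H i. destruct (block_decomp i) as [j [t [Ht ->]]]. rewrite !subst_block by auto.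
  rewrite H. f_equal. f_equal. destruct j; simpl; auto.
Qed.

Lemma subst_seq_le p0 D D' : p0 <= 1 -> binary D -> binary D' -> seq_le D D' -> seq_le (subst p0 D) (subst p0 D').
Proof.
  intros Hp HD HD' [H|H]. left. apply subst_seq_lt; auto. right. apply subst_ext; auto.
Qed.

Lemma block_le p x t : p <= 1 -> x <= 1 -> nth t (block p x) 0 <= M.
Proof.
  intros Hp Hx. pose proof admissible_nonnil. destruct (Nat.lt_ge_cases t L).
  - rewrite block_nth by auto. destruct Hv as [_ [Hc Hl]]. specialize (Hc t H0).
    destruct (Nat.eqb_spec p 0). destruct (Nat.eqb_spec t (L-1)). subst. simpl. nia. simpl; lia. lia.
  - rewrite nth_overflow. lia. rewrite block_length. auto.
Qed.

Lemma subst_le p0 D : p0 <= 1 -> binary D -> forall i, subst p0 D i <= M.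
Proof.
  intros Hp HD i. unfold subst. apply block_le. destruct (i / L); simpl; auto. auto.
Qed.

End Substitution.

Definition state_bit (s : gstate) : nat := match s with GA => 1 | _ => 0 end.

Lemma comp_aux_spec M c : forall d s, Forall (fun x => x <= 1) d ->
  (s = GStart -> match d with [] => True | x :: _ => x = 1 end) ->
  exists a, comp_aux M c s d = Some a /\ length a = length c * length d /\
    forall j t, j < length d -> t < length c ->
      nth (length c * j + t) a 0 = nth t (block M c (prev_bit (state_bit s) (pad d) j) (pad d j)) 0.
Proof.
  induction d as [|x d IH]; intros s Hd Hs.
  - exists []. simpl. split; auto. split. lia. intros; lia.
  - inversion Hd; subst.
    assert (Hstep : exists s', comp_aux M c s (x :: d) =
        match comp_aux M c s' d with None => None | Some r => Some (block M c (state_bit s) x ++ r) end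
        /\ s' <> GStart /\ state_bit s' = x).
    { destruct s; destruct x as [|[|]]; try lia; simpl;
      try (specialize (Hs eq_refl); lia);
      eexists; (split; [reflexivity|split; [discriminate|reflexivity]]). }
    destruct Hstep as [s' [E [Hs' Hst]]].
    destruct (IH s' H2 (fun e => False_ind _ (Hs' e))) as [r [Er [Lr Nr]]].
    rewrite E, Er. eexists. split. reflexivity.
    split. rewrite length_app, block_length, Lr. simpl. lia.
    intros j t Hj Ht. destruct j.
    + rewrite Nat.mul_0_r, Nat.add_0_l. rewrite app_nth1 by (rewrite block_length; auto). auto.
    + rewrite app_nth2 by (rewrite block_length; nia). rewrite block_length.
      replace (length c * S j + t - length c) with (length c * j + t) by nia.
      rewrite Nr by (simpl in Hj; lia). f_equal. f_equal.
      destruct j; simpl; auto.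
Qed.

Lemma compose_spec M c d : Forall (fun x => x <= 1) d -> match d with [] => True | x :: _ => x = 1 end ->
  exists a, compose M c d = Some a /\ length a = length c * length d /\
    forall j t, j < length d -> t < length c ->
      nth (length c * j + t) a 0 = nth t (block M c (prev_bit 0 (pad d) j) (pad d j)) 0.
Proof. intros H1 H2. apply (comp_aux_spec M c d GStart H1). auto. Qed.

(* Every word of [A_1] has this shape ([fundamental1_binary_word]). *)
Definition binary_word (d : list nat) := Forall (fun x => x <= 1) d /\ nth 0 d 0 = 1 /\ nth (length d - 1) d 0 = 0.

Lemma binary_word_nonnil d : binary_word d -> d <> [].
Proof. intros [_ [H _]] e. subst. simpl in H. lia. Qed.

Lemma binary_word_length d : binary_word d -> 2 <= length d.
Proof.
  intros [_ [H1 H2]]. destruct d as [|x [|y d]]; simpl in *; lia.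
Qed.

Lemma binary_word_head d : binary_word d -> match d with [] => True | x :: _ => x = 1 end.
Proof. intros [_ [H _]]. destruct d; simpl in *; auto. Qed.

Lemma per_binary d : Forall (fun x => x <= 1) d -> binary (per d).
Proof. intros H j. unfold per. pose proof (nth_le1_of_Forall d H (j mod length d)). lia. Qed.

Lemma mod_succ_cases J m : 0 < m -> (S J mod m = S (J mod m) /\ S (J mod m) < m) \/ (S J mod m = 0 /\ J mod m = m - 1).
Proof.
  intros Hm. pose proof (Nat.div_mod J m ltac:(lia)). pose proof (Nat.mod_upper_bound J m ltac:(lia)).
  destruct (Nat.lt_ge_cases (S (J mod m)) m).
  - left. split; auto. symmetry. apply (Nat.mod_unique _ _ (J / m)); lia.
  - right. split; [|lia]. symmetry. apply (Nat.mod_unique _ _ (S (J / m))); lia.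
Qed.

Lemma mod_block L m J t : 0 < L -> 0 < m -> t < L -> (L * J + t) mod (L * m) = L * (J mod m) + t.
Proof.
  intros HL Hm Ht. pose proof (Nat.div_mod J m ltac:(lia)). pose proof (Nat.mod_upper_bound J m ltac:(lia)).
  symmetry. apply (Nat.mod_unique _ _ (J / m)). nia. nia.
Qed.

Lemma right_seq_binary_word d J : binary_word d -> J < length d ->
  right_seq 1 d J = if J =? length d - 1 then 1 else nth J d 0.
Proof.
  intros Hd HJ. pose proof (binary_word_nonnil d Hd) as Hne. destruct Hd as [_ [_ Hl]].
  rewrite right_seq_head, wplus_nth by auto.
  destruct (Nat.eqb_spec J (length d - 1)) as [->|]; [rewrite Hl|]; reflexivity.
Qed.

Section ComposeSequences.
Variables (M : nat) (c d a : list nat).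
Hypothesis Hv : admissible M c.
Hypothesis Hd : binary_word d.
Hypothesis Ha : compose M c d = Some a.
Let L := length c.

Lemma compose_length : length a = L * length d.
Proof.
  destruct (compose_spec M c d (proj1 Hd) (binary_word_head d Hd)) as [a' [E [H _]]].
  rewrite Ha in E. injection E as <-. exact H.
Qed.

Lemma compose_nth j t : j < length d -> t < L ->
  nth (L * j + t) a 0 = nth t (block M c (prev_bit 0 (pad d) j) (pad d j)) 0.
Proof.
  destruct (compose_spec M c d (proj1 Hd) (binary_word_head d Hd)) as [a' [E [_ H]]].
  rewrite Ha in E. injection E as <-. apply H.
Qed.

Lemma compose_nonnil : a <> [].
Proof.
  intro e. pose proof compose_length as E. rewrite e in E.
  pose proof (admissible_length_pos M c Hv). pose proof (binary_word_length d Hd).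
  simpl in E. unfold L in E. nia.
Qed.

Lemma compose_last_lt : nth (length a - 1) a 0 < M.
Proof.
  pose proof (admissible_length_pos M c Hv) as HL. fold L in HL.
  pose proof (binary_word_length d Hd). pose proof Hd as [Hf [_ Hl]].
  rewrite compose_length. replace (L * length d - 1) with (L * (length d - 1) + (L - 1)) by nia.
  rewrite compose_nth by lia. change (pad d (length d - 1)) with (nth (length d - 1) d 0).
  assert (Hp : prev_bit 0 (pad d) (length d - 1) <= 1)
    by (destruct (length d - 1); simpl; [lia | apply nth_le1_of_Forall, Hf]).
  pose proof (admissible_nonnil M c Hv).
  rewrite Hl, block_nth by (auto; unfold L in *; lia).
  fold L. rewrite Nat.eqb_refl. destruct Hv as [_ [_ Hlast]]. fold L in Hlast.
  destruct (_ =? 0); simpl; lia.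
Qed.

Lemma per_compose : seq_eq (per a) (subst M c 0 (per d)).
Proof.
  pose proof (binary_word_length d Hd). pose proof (admissible_length_pos M c Hv).
  intro i. destruct (block_decomp M c Hv i) as [J [t [Ht ->]]]. fold L in Ht |- *.
  rewrite subst_block by auto. unfold per at 1. rewrite compose_length.
  rewrite mod_block by (auto; lia).
  rewrite compose_nth by (auto; apply Nat.mod_upper_bound; lia).
  f_equal. f_equal. destruct J as [|J]; [rewrite Nat.Div0.mod_0_l; reflexivity|].
  simpl. unfold per, pad.
  destruct (mod_succ_cases J (length d) ltac:(lia)) as [[e1 e2]|[e1 e2]]; rewrite e1; [reflexivity|].
  simpl. rewrite e2. symmetry. apply Hd.
Qed.

Lemma right_seq_compose_head :
  eq_upto (right_seq M a) (subst M c 0 (right_seq 1 d)) (L * length d).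
Proof.
  pose proof (admissible_nonnil M c Hv) as Hc. pose proof compose_nonnil as Hane.
  pose proof Hd as [Hf [_ Hl]].
  intros i Hi. destruct (block_decomp M c Hv i) as [J [t [Ht ->]]]. fold L in Ht.
  assert (HJ : J < length d) by nia.
  rewrite right_seq_head by (rewrite compose_length; lia).
  rewrite wplus_nth, compose_length, compose_nth, subst_block by auto.
  rewrite right_seq_binary_word by auto.
  assert (HPJ : prev_bit 0 (right_seq 1 d) J = prev_bit 0 (pad d) J).
  { destruct J as [|J]; [reflexivity|]. simpl.
    rewrite right_seq_binary_word by (auto; lia).
    destruct (Nat.eqb_spec J (length d - 1)); [lia | reflexivity]. }
  rewrite HPJ.
  assert (Hp : prev_bit 0 (pad d) J <= 1)
    by (destruct J; simpl; [lia | apply nth_le1_of_Forall; exact Hf]).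
  destruct (Nat.eqb_spec J (length d - 1)) as [e|e].
  - subst J. change (pad d (length d - 1)) with (nth (length d - 1) d 0).
    rewrite Hl, !block_nth by (auto; lia). fold L.
    destruct (Nat.eqb_spec t (L - 1)) as [e2|e2].
    + subst t. replace (L * (length d - 1) + (L - 1)) with (L * length d - 1) by nia.
      rewrite Nat.eqb_refl. destruct Hv as [_ [_ Hlt]]. fold L in Hlt.
      destruct (Nat.eqb_spec (prev_bit 0 (pad d) (length d - 1)) 0); simpl; lia.
    + destruct (Nat.eqb_spec (L * (length d - 1) + t) (L * length d - 1)); [nia|]. simpl. lia.
  - fold L. destruct (Nat.eqb_spec (L * J + t) (L * length d - 1)); [nia | reflexivity].
Qed.

Lemma right_seq_compose_tail i :
  right_seq M a (L * length d + i) = subst M c 0 (right_seq 1 d) (L * length d + i).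
Proof.
  pose proof (binary_word_nonnil d Hd) as Hdne. pose proof (binary_word_length d Hd).
  rewrite <- compose_length at 1. rewrite right_seq_tail by exact compose_nonnil.
  rewrite subst_shift by exact Hv.
  assert (Hpm : prev_bit 0 (right_seq 1 d) (length d) = 1).
  { destruct (length d) as [|n] eqn:E; [lia|]. simpl.
    rewrite right_seq_binary_word, E by (auto; lia).
    replace (S n - 1) with n by lia. rewrite Nat.eqb_refl. reflexivity. }
  assert (Hsh : seq_eq (shift (length d) (right_seq 1 d)) (fun j => 1 - per d j))
    by (intro j; apply right_seq_tail; exact Hdne).
  rewrite Hpm, (subst_ext M c Hv 1 _ _ Hsh).
  rewrite (subst_bar M c Hv 0 (per d) (per_binary d (proj1 Hd)) ltac:(lia)).
  unfold seq_bar. rewrite per_compose. reflexivity.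
Qed.

Lemma right_seq_compose : seq_eq (right_seq M a) (subst M c 0 (right_seq 1 d)).
Proof.
  intro i. destruct (Nat.lt_ge_cases i (L * length d)).
  - apply right_seq_compose_head. assumption.
  - replace i with (L * length d + (i - L * length d)) by lia. apply right_seq_compose_tail.
Qed.

End ComposeSequences.

Lemma subst_ones M c : admissible M c -> seq_eq (subst M c 0 ones) (right_seq M c).
Proof.
  intros Hv i. pose proof (admissible_length_pos M c Hv) as HL.
  destruct (block_decomp M c Hv i) as [J [t [Ht ->]]].
  rewrite subst_block by auto. destruct J as [|J].
  - rewrite Nat.mul_0_r, Nat.add_0_l, right_seq_head by (rewrite ?wplus_length; auto). reflexivity.
  - replace (length c * S J + t) with (length c + (length c * J + t)) by lia.
    rewrite right_seq_tail by exact (admissible_nonnil M c Hv).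
    unfold per. rewrite Nat.add_comm, Nat.mul_comm, Nat.Div0.mod_add, Nat.mod_small by auto.
    change (block M c (prev_bit 0 ones (S J)) (ones (S J))) with (wbar M c).
    rewrite wbar_nth by auto. reflexivity.
Qed.

(** * Thue-Morse words and the bases q_n' *)

Lemma bitsum_double n : bitsum (2 * n) = bitsum n.
Proof. unfold bitsum. rewrite Nat2N.inj_double. destruct (N.of_nat n); auto. Qed.

Lemma bitsum_sdouble n : bitsum (S (2 * n)) = S (bitsum n).
Proof. unfold bitsum. rewrite Nat2N.inj_succ_double. destruct (N.of_nat n); auto. Qed.

Lemma tau_le i : tau i <= 1.
Proof. unfold tau. destruct (Nat.odd _); lia. Qed.

Lemma tau_double n : tau (2 * n) = tau n.
Proof. unfold tau. rewrite bitsum_double. auto. Qed.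

Lemma tau_sdouble n : tau (S (2 * n)) = 1 - tau n.
Proof. unfold tau. rewrite bitsum_sdouble, Nat.odd_succ, <- Nat.negb_odd. destruct (Nat.odd _); auto. Qed.

Lemma tau_pow j : tau (2 ^ j) = 1.
Proof. induction j. reflexivity. rewrite Nat.pow_succ_r', tau_double. auto. Qed.

(* [tm j = tau_1 ... tau_(2^j - 1) 0], which is [(10)^{o j}] by [compose10_tm]. *)
Definition tm_digit (j i : nat) : nat := if i =? 2 ^ j - 1 then 0 else tau (S i).
Definition tm (j : nat) : list nat := map (tm_digit j) (seq 0 (2 ^ j)).

Lemma tm_length j : length (tm j) = 2 ^ j.
Proof. unfold tm. rewrite length_map, length_seq. auto. Qed.

Lemma tm_nth j i : i < 2 ^ j -> nth i (tm j) 0 = tm_digit j i.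
Proof. intros; unfold tm; apply nth_map_seq; auto. Qed.

Lemma pow2_pos j : 0 < 2 ^ j.
Proof. apply Nat.neq_0_lt_0, Nat.pow_nonzero. lia. Qed.

Lemma tm_binary_word j : 1 <= j -> binary_word (tm j).
Proof.
  intros Hj. assert (2 <= 2 ^ j) by (replace 2 with (2 ^ 1) at 1 by auto; apply Nat.pow_le_mono_r; lia).
  split; [|split].
  - apply Forall_le1_of_nth. intros i Hi. rewrite tm_length in Hi. rewrite tm_nth by auto. unfold tm_digit.
    destruct (_ =? _). lia. apply tau_le.
  - rewrite tm_nth by lia. unfold tm_digit. destruct (Nat.eqb_spec 0 (2 ^ j - 1)). lia. reflexivity.
  - rewrite tm_length, tm_nth by lia. unfold tm_digit. rewrite Nat.eqb_refl. auto.
Qed.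

Lemma admissible10 : admissible 1 [1; 0].
Proof. split. simpl; lia. split. intros t Ht. destruct t as [|[|]]; simpl in *; lia. simpl. lia. Qed.

Lemma block10 p x t : p <= 1 -> x <= 1 -> t < 2 -> nth t (block 1 [1;0] p x) 0 = if t =? 0 then 1 - p else x.
Proof.
  intros Hp Hx Ht. destruct p as [|[|]]; destruct x as [|[|]]; destruct t as [|[|]]; try lia; reflexivity.
Qed.

(* Blockwise this is the recursion [tau (2J + 1) = 1 - tau J], [tau (2J + 2) = tau (J + 1)]. *)
Lemma compose10_tm j : 1 <= j -> compose 1 [1; 0] (tm j) = Some (tm (S j)).
Proof.
  intros Hj. destruct (tm_binary_word j Hj) as [Hf [H0 Hl]].
  destruct (compose_spec 1 [1;0] (tm j) Hf (binary_word_head _ (tm_binary_word j Hj))) as [a [E [La Na]]].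
  rewrite E. f_equal. apply nth_ext with 0 0.
  - rewrite La, !tm_length. simpl length. rewrite Nat.pow_succ_r'. auto.
  - intros i Hi. rewrite La, tm_length in Hi. simpl length in Hi, Na.
    destruct (block_decomp 1 [1;0] admissible10 i) as [J [t [Ht ->]]]. simpl length in *.
    assert (HJ : J < 2 ^ j) by lia.
    rewrite Na by (rewrite ?tm_length; simpl; lia).
    assert (Hp : prev_bit 0 (pad (tm j)) J = tau J).
    { destruct J; [reflexivity|]. simpl. unfold pad. rewrite tm_nth by lia. unfold tm_digit.
      destruct (Nat.eqb_spec J (2 ^ j - 1)); [lia | reflexivity]. }
    rewrite Hp. unfold pad.
    rewrite block10 by (auto using tau_le; rewrite tm_nth by auto; unfold tm_digit;
                        destruct (_ =? _); auto using tau_le).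
    rewrite (tm_nth j J) by auto.
    rewrite (tm_nth (S j)) by (simpl; lia). unfold tm_digit. change (2 ^ S j) with (2 * 2 ^ j).
    destruct t as [|[|]]; [| |lia].
    + destruct (Nat.eqb_spec (2 * J + 0) (2 * 2 ^ j - 1)). lia. rewrite Nat.add_0_r, tau_sdouble. auto.
    + change (1 =? 0) with false. cbv iota.
      destruct (Nat.eqb_spec J (2 ^ j - 1)); destruct (Nat.eqb_spec (2 * J + 1) (2 * 2 ^ j - 1)); try lia.
      replace (S (2 * J + 1)) with (2 * S J) by lia. rewrite tau_double. auto.
Qed.

Definition subst10 (D : seqn) : seqn := subst 1 [1; 0] 0 D.
Definition iter_subst10 (k : nat) (D : seqn) : seqn := Nat.iter k subst10 D.

Lemma iter_subst10_S k D : iter_subst10 (S k) D = subst10 (iter_subst10 k D).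
Proof. reflexivity. Qed.

Lemma subst10_binary D : binary D -> binary (subst10 D).
Proof. intros HD i. apply (subst_le 1 [1;0] admissible10); auto. Qed.

Lemma iter_subst10_binary k D : binary D -> binary (iter_subst10 k D).
Proof. induction k; intros H. auto. rewrite iter_subst10_S. apply subst10_binary; auto. Qed.

Lemma binary_word_compose10 w w' : binary_word w -> compose 1 [1;0] w = Some w' -> binary_word w'.
Proof.
  intros Hw Hc. pose proof (binary_word_length w Hw). pose proof Hw as [Hf [H0 Hl]].
  pose proof (compose_length 1 [1;0] w w' Hw Hc) as La.
  pose proof (compose_nth 1 [1;0] w w' Hw Hc) as Na. simpl length in La, Na.
  assert (HpL : forall J, prev_bit 0 (pad w) J <= 1)
    by (intros [|J]; simpl; [lia | apply nth_le1_of_Forall; auto]).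
  split; [|split].
  - apply Forall_le1_of_nth. intros i Hi. rewrite La in Hi.
    destruct (block_decomp 1 [1;0] admissible10 i) as [J [t [Ht ->]]]. simpl length in *.
    rewrite Na by lia. apply (block_le 1 [1;0] admissible10); [auto | apply nth_le1_of_Forall; auto].
  - change (nth 0 w' 0) with (nth (2 * 0 + 0) w' 0). rewrite Na by lia.
    unfold pad. rewrite H0. reflexivity.
  - rewrite La. replace (2 * length w - 1) with (2 * (length w - 1) + 1) by lia.
    rewrite Na by lia. unfold pad at 2. rewrite Hl, block10 by (auto; lia). reflexivity.
Qed.

Lemma comp10_iter_spec k b w : binary_word b -> comp10_iter k b = Some w ->
  binary_word w /\ seq_eq (per w) (iter_subst10 k (per b)) /\
  seq_eq (right_seq 1 w) (iter_subst10 k (right_seq 1 b)).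
Proof.
  intros Hb. revert w. induction k; intros w Hw.
  - injection Hw as <-. split; [exact Hb | split; intro; reflexivity].
  - simpl in Hw. destruct (comp10_iter k b) as [w0|] eqn:E0; [|discriminate].
    destruct (IHk w0 eq_refl) as [Hb0 [H1 H2]].
    split; [|split]; [eapply binary_word_compose10; eauto | intro i..];
      rewrite iter_subst10_S; unfold subst10.
    + rewrite (per_compose 1 [1;0] w0 w admissible10 Hb0 Hw). apply subst_ext; auto using admissible10.
    + rewrite (right_seq_compose 1 [1;0] w0 w admissible10 Hb0 Hw). apply subst_ext; auto using admissible10.
Qed.

Lemma iter_subst10_ones j : seq_eq (iter_subst10 j ones) (right_seq 1 (tm j)).
Proof.
  destruct j as [|j].
  - intros [|i]; [reflexivity|]. unfold right_seq, pre_per. simpl.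
    destruct (i - 0 mod 1) as [|[|]]; reflexivity.
  - induction j.
    + apply (subst_ones 1 [1;0] admissible10).
    + intro i. rewrite iter_subst10_S. unfold subst10. rewrite (subst_ext 1 [1;0] admissible10 0 _ _ IHj).
      symmetry. apply (right_seq_compose 1 [1;0] (tm (S j)) (tm (S (S j))) admissible10).
      * apply tm_binary_word; lia.
      * apply compose10_tm; lia.
Qed.

Lemma unit_lift_cases M : 1 <= M ->
  (exists k, M = 2 * k /\ 1 <= k /\ unit_lift M = [k] /\ Nat.even M = true /\ M / 2 = k) \/
  (exists k, M = 2 * k + 1 /\ unit_lift M = [S k; k] /\ Nat.even M = false /\ M / 2 = k).
Proof.
  intros HM. destruct (Nat.Even_or_Odd M) as [[k Hk]|[k Hk]].
  - left. exists k. assert (Nat.even M = true) by (apply Nat.even_spec; exists k; auto).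
    assert (M / 2 = k) by (subst; rewrite Nat.mul_comm, Nat.div_mul; lia).
    unfold unit_lift. rewrite H, H0. repeat split; auto; lia.
  - right. exists k. assert (Nat.even M = false).
    { destruct (Nat.even M) eqn:e; auto. apply Nat.even_spec in e. destruct e as [k' Hk']. lia. }
    assert (M / 2 = k) by (symmetry; apply (Nat.div_unique _ _ _ 1); lia).
    unfold unit_lift. rewrite H, H0. repeat split; auto.
Qed.

Lemma admissible_unit_lift M : 1 <= M -> admissible M (unit_lift M).
Proof.
  intros HM. destruct (unit_lift_cases M HM) as [[k [-> [Hk [-> _]]]]|[k [-> [-> _]]]].
  - split. simpl; lia. split. intros [|t] Ht; simpl in *; lia. simpl. lia.
  - split. simpl; lia. split. intros [|[|t]] Ht; simpl in *; lia. simpl. lia.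
Qed.

Lemma lam_block M J t : 1 <= M -> t < length (unit_lift M) ->
  lam M (S (length (unit_lift M) * J + t)) = nth t (block M (unit_lift M) (tau J) (tau (S J))) 0.
Proof.
  intros HM Ht. pose proof (admissible_unit_lift M HM) as Hv. pose proof (admissible_nonnil M _ Hv) as Hne.
  rewrite block_nth by (auto using tau_le).
  pose proof (tau_le J). pose proof (tau_le (S J)).
  destruct (unit_lift_cases M HM) as [[k [Mk [Hk [Hu [He Hd]]]]]|[k [Mk [Hu [He Hd]]]]];
  rewrite Hu in *; unfold lam; rewrite He, Hd; simpl length in *.
  - assert (t = 0) by lia. subst t. simpl. rewrite Nat.sub_0_r, Nat.mul_1_r.
    rewrite !Nat.add_0_r. destruct (tau J) as [|[|]], (tau (S J)) as [|[|]]; simpl; lia.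
  - destruct t as [|[|]]; [| |lia].
    + replace (S (2 * J + 0)) with (S (2 * J)) by lia. rewrite tau_sdouble. simpl.
      destruct (tau J) as [|[|]]; simpl; lia.
    + replace (S (2 * J + 1)) with (2 * S J) by lia. rewrite tau_double. simpl.
      destruct (tau J) as [|[|]]; destruct (tau (S J)) as [|[|]]; simpl; lia.
Qed.

Definition qprime_seq (M n : nat) : seqn := pre_per (lam_word M n) (wplus (wbar M (lam_word M n))).

Lemma lamN_unit_lift M j : 1 <= M -> lamN M (S j) = length (unit_lift M) * 2 ^ j.
Proof.
  intros HM. unfold lamN.
  destruct (unit_lift_cases M HM) as [[k [_ [_ [Hu [He _]]]]]|[k [_ [Hu [He _]]]]];
    rewrite He, Hu; simpl; rewrite ?Nat.sub_0_r; lia.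
Qed.

Lemma lam_word_length M j : 1 <= M -> length (lam_word M (S j)) = length (unit_lift M) * 2 ^ j.
Proof. intros HM. unfold lam_word. rewrite length_map, length_seq. apply lamN_unit_lift, HM. Qed.

Lemma iter_subst10_ones_tau j J : J < 2 ^ j -> iter_subst10 j ones J = tau (S J).
Proof.
  intros HJ. destruct j as [|j]; [simpl in HJ; replace J with 0 by lia; reflexivity|].
  assert (Hb : binary_word (tm (S j))) by (apply tm_binary_word; lia).
  rewrite iter_subst10_ones, right_seq_binary_word, tm_length by (rewrite ?tm_length; auto).
  destruct (Nat.eqb_spec J (2 ^ S j - 1)) as [->|].
  - replace (S (2 ^ S j - 1)) with (2 ^ S j) by (pose proof (pow2_pos (S j)); lia).
    symmetry. apply tau_pow.
  - rewrite tm_nth by exact HJ. unfold tm_digit.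
    destruct (Nat.eqb_spec J (2 ^ S j - 1)); [contradiction | reflexivity].
Qed.

Lemma lam_word_nth M j i : 1 <= M -> i < length (lam_word M (S j)) ->
  nth i (lam_word M (S j)) 0 = subst M (unit_lift M) 0 (iter_subst10 j ones) i.
Proof.
  intros HM Hi. pose proof (admissible_unit_lift M HM) as Hv.
  pose proof Hi as Hi'. rewrite lam_word_length in Hi' by exact HM.
  unfold lam_word. rewrite nth_map_seq by (rewrite lamN_unit_lift; auto).
  destruct (block_decomp M _ Hv i) as [J [t [Ht ->]]].
  assert (HJ : J < 2 ^ j) by nia.
  rewrite lam_block, subst_block by auto.
  rewrite iter_subst10_ones_tau by exact HJ. f_equal. f_equal.
  destruct J as [|J]; [reflexivity|]. simpl. symmetry. apply iter_subst10_ones_tau. lia.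
Qed.

Lemma subst_unit_lift_ones_right_seq M j : 1 <= M -> exists a,
  a <> [] /\ nth (length a - 1) a 0 < M /\ length a = length (unit_lift M) * 2 ^ j /\
  seq_eq (subst M (unit_lift M) 0 (iter_subst10 j ones)) (right_seq M a).
Proof.
  intros HM. pose proof (admissible_unit_lift M HM) as Hv.
  destruct j as [|j].
  - exists (unit_lift M). split; [|split; [|split]].
    + exact (admissible_nonnil M _ Hv).
    + apply Hv.
    + simpl. lia.
    + exact (subst_ones M _ Hv).
  - assert (Hb : binary_word (tm (S j))) by (apply tm_binary_word; lia).
    destruct (compose_spec M (unit_lift M) (tm (S j)) (proj1 Hb) (binary_word_head _ Hb))
      as [a [Ea _]].
    exists a. split; [|split; [|split]].
    + exact (compose_nonnil M _ _ a Hv Hb Ea).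
    + exact (compose_last_lt M _ _ a Hv Hb Ea).
    + rewrite (compose_length M _ _ a Hb Ea), tm_length. reflexivity.
    + intro i. rewrite (right_seq_compose M _ _ a Hv Hb Ea).
      apply subst_ext; [exact Hv | apply iter_subst10_ones].
Qed.

Lemma subst_unit_lift_ones M j : 1 <= M ->
  seq_eq (subst M (unit_lift M) 0 (iter_subst10 j ones)) (qprime_seq M (S j)).
Proof.
  intros HM. destruct (subst_unit_lift_ones_right_seq M j HM) as [a [Hne [Hlast [Hlen Ha]]]].
  assert (E : lam_word M (S j) = wplus a).
  { apply nth_ext with 0 0; [rewrite wplus_length, lam_word_length; auto|].
    intros i Hi. assert (i < length a) by (rewrite lam_word_length in Hi; lia).
    rewrite lam_word_nth, Ha, right_seq_head by auto. reflexivity. }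
  intro i. rewrite Ha. unfold qprime_seq, right_seq. rewrite E, wplus_wbar_wplus by auto.
  reflexivity.
Qed.

(** * Fundamental words *)

Lemma pad_overflow x j : length x <= j -> pad x j = 0.
Proof. intros. unfold pad. apply nth_overflow. auto. Qed.

Lemma lt_upto_of_word_lt x y n :
  length x = n -> length y = n -> word_lt x y -> lt_upto (pad x) (pad y) n.
Proof.
  intros Hx Hy [k [Ha Hl]]. destruct (Nat.lt_ge_cases k n).
  - exists k. split; auto.
  - rewrite !pad_overflow in Hl by lia. lia.
Qed.

Lemma le_upto_of_word_le x y n :
  length x = n -> length y = n -> word_le x y -> le_upto (pad x) (pad y) n.
Proof.
  intros Hx Hy [H|H]; [left; apply lt_upto_of_word_lt; auto | right; intros i _; auto].
Qed.

Lemma word_lt_of_lt_upto x y n X Y :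
  eq_upto X (pad x) n -> eq_upto Y (pad y) n -> lt_upto X Y n -> word_lt x y.
Proof.
  intros H1 H2 [k [Hk [Ha Hl]]]. exists k. split.
  - intros i Hi. rewrite <- H1, <- H2 by lia. auto.
  - rewrite <- H1, <- H2 by lia. auto.
Qed.

Lemma word_le_of_le_upto x y n X Y : length x = n -> length y = n ->
  eq_upto X (pad x) n -> eq_upto Y (pad y) n -> le_upto X Y n -> word_le x y.
Proof.
  intros Lx Ly H1 H2 [H|H]; [left; eapply word_lt_of_lt_upto; eauto|].
  right. intro i. destruct (Nat.lt_ge_cases i n).
  - rewrite <- H1, <- H2 by auto. auto.
  - rewrite !pad_overflow by lia. auto.
Qed.

Lemma per_lt a i : i < length a -> per a i = nth i a 0.
Proof. intros H. unfold per. rewrite Nat.mod_small; auto. Qed.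

Lemma per_period a i : 0 < length a -> per a (length a + i) = per a i.
Proof.
  intros H. unfold per. f_equal. rewrite Nat.add_comm.
  replace (i + length a) with (i + 1 * length a) by lia. apply Nat.Div0.mod_add.
Qed.

Lemma per_period_k a k i : 0 < length a -> per a (length a * k + i) = per a i.
Proof.
  intros H. induction k; [rewrite Nat.mul_0_r; auto|].
  replace (length a * S k + i) with (length a + (length a * k + i)) by lia.
  rewrite per_period; auto.
Qed.

Lemma per_mod a i : 0 < length a -> per a i = per a (i mod length a).
Proof.
  intros H. rewrite (Nat.div_mod i (length a)) at 1 by lia. rewrite per_period_k; auto.
Qed.

Lemma shift_per_period a i : 0 < length a -> i mod length a = 0 -> seq_eq (shift i (per a)) (per a).
Proof.
  intros H Hi j. unfold shift. rewrite (Nat.div_mod i (length a)) by lia. rewrite Hi, Nat.add_0_r.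
  apply per_period_k; auto.
Qed.

Lemma per_le M a : Forall (fun c => c <= M) a -> forall i, per a i <= M.
Proof.
  intros Hf i. unfold per. rewrite Forall_forall in Hf.
  destruct (Nat.lt_ge_cases (i mod length a) (length a)).
  - apply Hf, nth_In. auto.
  - rewrite nth_overflow by auto. lia.
Qed.

Lemma eq_upto_skipn a i n : i + n <= length a -> eq_upto (pad (skipn i a)) (shift i (per a)) n.
Proof. intros H j Hj. unfold pad, shift. rewrite nth_skipn, per_lt by lia. reflexivity. Qed.

Lemma eq_upto_firstn a n : n <= length a -> eq_upto (pad (firstn n a)) (per a) n.
Proof.
  intros H j Hj. unfold pad. rewrite nth_firstn. destruct (Nat.ltb_spec j n); [|lia].
  rewrite per_lt by lia. reflexivity.
Qed.

Lemma eq_upto_wbar M x n : n <= length x -> eq_upto (pad (wbar M x)) (seq_bar M (pad x)) n.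
Proof. intros H j Hj. unfold pad, seq_bar. rewrite wbar_nth by lia. reflexivity. Qed.

Lemma fundamental_windows M a : 2 <= length a ->
  (forall i, 1 <= i < length a ->
     word_le (wbar M (firstn (length a - i) a)) (skipn i a) /\
     word_lt (skipn i a) (firstn (length a - i) a)) ->
  forall i, 1 <= i < length a ->
    lt_upto (shift i (per a)) (per a) (length a - i) /\
    le_upto (seq_bar M (per a)) (shift i (per a)) (length a - i).
Proof.
  intros Hm H i Hi. destruct (H i Hi) as [H1 H2]. split.
  - apply (lt_upto_of_word_lt _ _ (length a - i)) in H2;
      [| rewrite length_skipn; auto | rewrite length_firstn; lia].
    apply (lt_upto_ext (pad (skipn i a)) (pad (firstn (length a - i) a)));
      [apply eq_upto_skipn; lia | apply eq_upto_firstn; lia | auto].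
  - apply (le_upto_of_word_le _ _ (length a - i)) in H1;
      [| rewrite wbar_length, length_firstn; lia | rewrite length_skipn; auto].
    apply (le_upto_ext (pad (wbar M (firstn (length a - i) a))) (pad (skipn i a)));
      [| apply eq_upto_skipn; lia | exact H1].
    intros j Hj. rewrite (eq_upto_wbar M (firstn (length a - i) a) (length a - i));
      [| rewrite length_firstn; lia | auto].
    unfold seq_bar. rewrite (eq_upto_firstn a (length a - i)); auto; lia.
Qed.

Lemma periodic_eq s t m : 0 < m -> (forall i, s (m + i) = s i) -> (forall i, t (m + i) = t i) ->
  eq_upto s t m -> seq_eq s t.
Proof.
  intros Hm Hs Ht Ha i. induction i as [i IH] using (well_founded_induction lt_wf).
  destruct (Nat.lt_ge_cases i m); [auto|].
  replace i with (m + (i - m)) by lia. rewrite Hs, Ht. apply IH. lia.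
Qed.

Section FundamentalPeriodic.
Variables (M : nat) (a : list nat).
Hypothesis Hlen : 2 <= length a.
Hypothesis Hf : Forall (fun x => x <= M) a.
Hypothesis HW : forall i, 1 <= i < length a ->
  lt_upto (shift i (per a)) (per a) (length a - i) /\
  le_upto (seq_bar M (per a)) (shift i (per a)) (length a - i).

Lemma per_head_gt_half : M < 2 * per a 0.
Proof.
  destruct (HW (length a - 1) ltac:(lia)) as [H1 H2].
  replace (length a - (length a - 1)) with 1 in H1, H2 by lia.
  destruct H1 as [k [Hk [_ Hl]]]. replace k with 0 in Hl by lia. unfold shift in Hl.
  destruct H2 as [[k' [Hk2 [_ Hl2]]]|H2].
  - replace k' with 0 in Hl2 by lia. unfold shift, seq_bar in Hl2. lia.
  - specialize (H2 0 ltac:(lia)). unfold shift, seq_bar in H2. lia.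
Qed.

(* When the first [length a - i] letters tie, the window at [length a - i] compares the next [i]
   letters, and periodicity closes the argument. *)
Lemma per_shift_bounds i : i mod length a <> 0 ->
  seq_lt (shift i (per a)) (per a) /\ seq_le (seq_bar M (per a)) (shift i (per a)).
Proof.
  intros Hi. set (m := length a) in *.
  assert (Hsh : seq_eq (shift i (per a)) (shift (i mod m) (per a))).
  { intro j. unfold shift. rewrite (per_mod a (i + j)), (per_mod a (i mod m + j)) by lia.
    f_equal. fold m. rewrite Nat.Div0.add_mod_idemp_l. reflexivity. }
  assert (Hper : forall j, per a (m + j) = per a j) by (intro j; apply per_period; lia).
  set (i' := i mod m). assert (Hi' : 1 <= i' < m) by (split; [lia | apply Nat.mod_upper_bound; lia]).
  assert (Hle : forall j, per a j <= M) by (apply per_le, Hf).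
  destruct (HW i' Hi') as [H1 H2]. split.
  - eapply seq_lt_ext; [intro; symmetry; apply Hsh | intro; reflexivity | eapply seq_lt_of_lt_upto; eauto].
  - eapply seq_le_ext; [intro; reflexivity | intro; symmetry; apply Hsh|].
    destruct H2 as [H2|H2]; [left; eapply seq_lt_of_lt_upto; eauto|].
    destruct (HW (m - i') ltac:(lia)) as [_ H3].
    replace (m - (m - i')) with i' in H3 by lia.
    apply (le_upto_bar M) in H3; [| intros; split; [unfold seq_bar; lia | apply Hle]].
    assert (H4 : le_upto (seq_bar M (per a)) (shift i' (per a)) m).
    { replace m with ((m - i') + i') by lia. apply le_upto_of_shift; auto.
      eapply le_upto_ext; [intros j Hj; reflexivity | | exact H3].
      intros j Hj. unfold seq_bar, shift. replace (i' + (m - i' + j)) with (m + j) by lia.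
      rewrite Hper. pose proof (Hle j). lia. }
    destruct H4 as [H4|H4]; [left; eapply seq_lt_of_lt_upto; eauto|].
    right. apply periodic_eq with m; [lia | | | exact H4].
    + intro j. unfold seq_bar. rewrite Hper. reflexivity.
    + intro j. unfold shift. fold i'. replace (i' + (m + j)) with (m + (i' + j)) by lia. apply Hper.
Qed.

Lemma per_shift_le i : seq_le (shift i (per a)) (per a).
Proof.
  destruct (Nat.eq_dec (i mod length a) 0).
  - right. apply shift_per_period; auto; lia.
  - left. apply per_shift_bounds; auto.
Qed.

Lemma per_bar_le_shift i : seq_le (seq_bar M (per a)) (shift i (per a)).
Proof.
  destruct (Nat.eq_dec (i mod length a) 0); [|apply per_shift_bounds; auto].
  eapply seq_le_ext; [intro; reflexivity | intro j; symmetry; apply shift_per_period; auto; lia|].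
  left. exists 0. split; [intros; lia|]. unfold seq_bar. pose proof per_head_gt_half. lia.
Qed.

Lemma per_range j : M - per a 0 <= per a j <= per a 0.
Proof.
  pose proof (seq_le_head _ _ (per_bar_le_shift j)). pose proof (seq_le_head _ _ (per_shift_le j)).
  unfold seq_bar, shift in *. rewrite Nat.add_0_r in *. lia.
Qed.

End FundamentalPeriodic.

Lemma greatest_below (P : nat -> Prop) i : (exists j, j < i /\ P j) ->
  exists j, j < i /\ P j /\ forall k, j < k < i -> ~ P k.
Proof.
  intros [j0 [Hj0 Pj0]].
  destruct (least_witness (fun x => x < i /\ P (i - 1 - x))) as [x [[Hx Px] Hmin]].
  { exists (i - 1 - j0). split; [lia|]. replace (i - 1 - (i - 1 - j0)) with j0 by lia. auto. }
  exists (i - 1 - x). split; [lia | split; [auto|]].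
  intros k Hk Pk. apply (Hmin (i - 1 - k)); [lia|]. split; [lia|].
  replace (i - 1 - (i - 1 - k)) with k by lia. auto.
Qed.

(* Only the inequality selected by the preceding bit needs to be checked: a run of equal bits
   before position [i] reduces the other inequality to one at the start of that run. *)
Section BinaryLocalWindows.
Variables (D : seqn) (n : nat).
Hypothesis HD : binary D.
Hypothesis H0 : D 0 = 1.
Hypothesis Hlast : D (n - 1) = 0.
Hypothesis Hn : 1 <= n.
Hypothesis Hlocal : forall i, 1 <= i < n ->
  (D (i - 1) = 0 -> lt_upto (shift i D) D (n - i)) /\
  (D (i - 1) = 1 -> le_upto (seq_bar 1 D) (shift i D) (n - i)).

Lemma binary_shift_lt : forall i, 1 <= i < n -> lt_upto (shift i D) D (n - i).
Proof.
  intros i. induction i as [i IH] using (well_founded_induction lt_wf). intros Hi.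
  assert (HDi := HD (i - 1)).
  destruct (Nat.eq_dec (D (i - 1)) 0) as [e|e]; [apply (Hlocal i Hi); auto|].
  destruct (classic (exists j, j < i /\ D j = 0)) as [Hex|Hnex].
  - destruct (greatest_below (fun j => D j = 0) i Hex) as [j [Hj [Dj Hmax]]].
    assert (Hj1 : j < i - 1) by (destruct (Nat.eq_dec j (i - 1)); [subst; lia | lia]).
    assert (Hones : forall k, j < k < i -> D k = 1)
      by (intros k Hk; specialize (Hmax k Hk); specialize (HD k); lia).
    destruct (Hlocal (j + 1) ltac:(lia)) as [HU _]. replace (j + 1 - 1) with j in HU by lia.
    specialize (HU Dj).
    set (i' := i - (j + 1)).
    assert (Hag : eq_upto (shift (j + 1) D) D i').
    { destruct HU as [k [Hk [Ha Hl]]]. intros x Hx.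
      destruct (Nat.lt_ge_cases x k); [auto|].
      exfalso. unfold shift in Hl. rewrite Hones in Hl by lia. specialize (HD k). lia. }
    assert (H2 : lt_upto (shift i' (shift (j + 1) D)) (shift i' D) (n - i)).
    { apply lt_upto_shift; [auto|]. replace (i' + (n - i)) with (n - (j + 1)) by lia. auto. }
    assert (H3 : le_upto (shift i' D) D (n - i)).
    { apply (le_upto_mono _ _ (n - i')); [left; apply IH | ]; lia. }
    eapply lt_le_upto_trans; [|exact H3].
    eapply lt_upto_ext; [| |exact H2]; intros x Hx; auto. unfold shift. f_equal. lia.
  - assert (Hall : forall k, k < i -> D k = 1).
    { intros k Hk. specialize (HD k).
      destruct (Nat.eq_dec (D k) 0); [exfalso; apply Hnex; eauto | lia]. }
    destruct (least_witness (fun r => i <= r /\ D r = 0)) as [r [[Hr Dr] Hrmin]].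
    { exists (n - 1). split; [lia | auto]. }
    assert (Hrn : r < n).
    { destruct (Nat.lt_ge_cases r n); auto. exfalso.
      apply (Hrmin (n - 1)); [lia | split; [lia | auto]]. }
    assert (Hones : forall k, k < r -> D k = 1).
    { intros k Hk. destruct (Nat.lt_ge_cases k i); [auto|]. specialize (HD k).
      destruct (Nat.eq_dec (D k) 0); [exfalso; apply (Hrmin k Hk); split; auto | lia]. }
    exists (r - i). split; [lia | split].
    + intros x Hx. unfold shift. rewrite !Hones by lia. reflexivity.
    + unfold shift. replace (i + (r - i)) with r by lia. rewrite Dr, Hones by lia. lia.
Qed.

Lemma binary_bar_le_shift : forall i, 1 <= i < n -> le_upto (seq_bar 1 D) (shift i D) (n - i).
Proof.
  intros i Hi. assert (HDi := HD (i - 1)).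
  destruct (Nat.eq_dec (D (i - 1)) 1) as [e|e]; [apply (Hlocal i Hi); auto|].
  destruct (greatest_below (fun j => D j = 1) i) as [j [Hj [Dj Hmax]]].
  { exists 0. split; [lia | auto]. }
  assert (Hj1 : j < i - 1) by (destruct (Nat.eq_dec j (i - 1)); [subst; lia | lia]).
  assert (Hzeros : forall k, j < k < i -> D k = 0)
    by (intros k Hk; specialize (Hmax k Hk); specialize (HD k); lia).
  destruct (Hlocal (j + 1) ltac:(lia)) as [_ HL]. replace (j + 1 - 1) with j in HL by lia.
  specialize (HL Dj).
  set (i' := i - (j + 1)).
  assert (Hag : eq_upto (seq_bar 1 D) (shift (j + 1) D) i').
  { intros x Hx. destruct HL as [[k [Hk [Ha Hl]]]|Ha].
    - destruct (Nat.lt_ge_cases x k); [auto|].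
      exfalso. unfold shift in Hl. rewrite Hzeros in Hl by lia. lia.
    - apply Ha. lia. }
  assert (H2 : le_upto (shift i' (seq_bar 1 D)) (shift i' (shift (j + 1) D)) (n - i)).
  { apply le_upto_shift; [auto|]. replace (i' + (n - i)) with (n - (j + 1)) by lia. auto. }
  assert (H3 : le_upto (shift i' D) D (n - i)).
  { apply (le_upto_mono _ _ (n - i')); [left; apply binary_shift_lt | ]; lia. }
  apply (le_upto_bar 1) in H3; [|intros; split; apply HD].
  eapply le_upto_trans; [exact H3|].
  eapply le_upto_ext; [| |exact H2]; intros x Hx; auto. unfold shift. f_equal. lia.
Qed.

End BinaryLocalWindows.

Lemma binary_word_map D n : binary D -> D 0 = 1 -> D (n - 1) = 0 -> 1 <= n ->
  binary_word (map D (seq 0 n)).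
Proof.
  intros HD H0 Hl Hn. split; [|split].
  - apply Forall_le1_of_nth. intros i Hi. rewrite length_map, length_seq in Hi.
    rewrite nth_map_seq by exact Hi. apply HD.
  - rewrite nth_map_seq by lia. exact H0.
  - rewrite length_map, length_seq, nth_map_seq by lia. exact Hl.
Qed.

Lemma fundamental1_map D n : binary D -> D 0 = 1 -> D (n - 1) = 0 -> 1 <= n ->
  (forall i, 1 <= i < n ->
     (D (i - 1) = 0 -> lt_upto (shift i D) D (n - i)) /\
     (D (i - 1) = 1 -> le_upto (seq_bar 1 D) (shift i D) (n - i))) ->
  fundamental 1 (map D (seq 0 n)).
Proof.
  intros HD H0 Hl Hn Hlocal. set (d := map D (seq 0 n)).
  assert (Hbd : binary_word d) by (apply binary_word_map; auto).
  assert (Hdl : length d = n) by (unfold d; rewrite length_map, length_seq; auto).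
  assert (Hdn : forall j, j < n -> nth j d 0 = D j) by (intros; unfold d; apply nth_map_seq; auto).
  split; [apply Forall_impl with (2 := proj1 Hbd); auto|].
  left. split; [apply binary_word_length; auto|].
  intros i Hi. rewrite Hdl in Hi |- *. split.
  - apply (word_le_of_le_upto _ _ (n - i) (seq_bar 1 D) (shift i D)).
    + rewrite wbar_length, length_firstn. lia.
    + rewrite length_skipn. lia.
    + intros j Hj. unfold pad, seq_bar. rewrite wbar_nth by (rewrite length_firstn; lia).
      rewrite nth_firstn. destruct (Nat.ltb_spec j (n - i)); [|lia]. rewrite Hdn by lia. reflexivity.
    + intros j Hj. unfold pad, shift. rewrite nth_skipn, Hdn by lia. reflexivity.
    + apply binary_bar_le_shift; auto; lia.
  - apply (word_lt_of_lt_upto _ _ (n - i) (shift i D) D).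
    + intros j Hj. unfold pad, shift. rewrite nth_skipn, Hdn by lia. reflexivity.
    + intros j Hj. unfold pad. rewrite nth_firstn.
      destruct (Nat.ltb_spec j (n - i)); [|lia]. rewrite Hdn by lia. reflexivity.
    + apply binary_shift_lt; auto; lia.
Qed.

Lemma eq_upto_endpoints X Y Z L : 0 < L -> eq_upto X Y (L - 1) -> Y (L - 1) = S (X (L - 1)) ->
  le_upto X Z L -> le_upto Z Y L -> eq_upto Z X L \/ eq_upto Z Y L.
Proof.
  intros HL Hxy Hl H1 H2.
  destruct H1 as [[k [Hk [Ha Hlt]]]|Ha]; [|left; apply eq_upto_sym; auto].
  assert (k = L - 1).
  { destruct (Nat.eq_dec k (L - 1)); auto. exfalso.
    apply (lt_upto_not_le Y Z L); [|exact H2]. exists k. split; [lia | split].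
    - intros i Hi. rewrite <- Hxy by lia. auto.
    - rewrite <- Hxy by lia. auto. }
  subst k. right.
  destruct H2 as [[k [Hk2 [Hb Hlt2]]]|Hb]; auto.
  destruct (Nat.eq_dec k (L - 1)); [subst k; lia|].
  exfalso. rewrite <- Ha, <- Hxy in Hlt2 by lia. lia.
Qed.

(** * Parsing sequences below alpha(q_T) *)

Section Parse.
Variables (M : nat) (c : list nat).
Hypothesis Hv : admissible M c.
Let L := length c.
Variable s : seqn.
Hypothesis Hsle : forall i, s i <= M.
Hypothesis Hshift_le : forall i, seq_le (shift i s) s.
Hypothesis Hbar_le : forall i, seq_le (seq_bar M s) (shift i s).
Hypothesis Hle_right : seq_le s (right_seq M c).
Hypothesis Hhead : eq_upto s (pad (wplus c)) L.

Definition block_at (j : nat) : list nat := map (fun t => s (L * j + t)) (seq 0 L).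

(* Reads [s] along the graph G: after bit 1 (state A) the next block is [bar c] or [bar c^+],
   after bit 0 (state B) it is [c^+] or [c]. *)
Fixpoint parse_bits (j : nat) : nat :=
  match j with
  | 0 => 1
  | S j' => if parse_bits j' =? 1
            then (if list_eq_dec Nat.eq_dec (block_at (S j')) (wbar M c) then 1 else 0)
            else (if list_eq_dec Nat.eq_dec (block_at (S j')) (wplus c) then 1 else 0)
  end.

Lemma parse_bits_binary : binary parse_bits.
Proof. intros [|j]; simpl; [lia|]. destruct (parse_bits j =? 1), list_eq_dec; lia. Qed.

Lemma block_at_spec j w : length w = L -> (block_at j = w <-> eq_upto (shift (L * j) s) (pad w) L).
Proof.
  intros Hw. split.
  - intros <- t Ht. unfold pad, block_at, shift. rewrite nth_map_seq; auto.
  - intros H. apply nth_ext with 0 0; [unfold block_at; rewrite length_map, length_seq; auto|].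
    intros t Ht. unfold block_at in Ht |- *. rewrite length_map, length_seq in Ht.
    rewrite nth_map_seq by auto. apply H. auto.
Qed.

Let Pb := per (wbar M c).
Let Pc := per c.

Lemma Pb_prefix : eq_upto Pb (pad (wbar M c)) L.
Proof. intros i Hi. unfold Pb. rewrite per_lt by (rewrite wbar_length; auto). reflexivity. Qed.

Lemma Pc_prefix : eq_upto Pc (pad c) L.
Proof. intros i Hi. unfold Pc. rewrite per_lt; auto. Qed.

Lemma Pb_periodic : seq_eq (shift L Pb) Pb.
Proof.
  intro i. pose proof (admissible_length_pos M c Hv). unfold shift, Pb, L in *.
  rewrite <- (wbar_length M c) at 1. apply per_period. rewrite wbar_length; auto.
Qed.

Lemma Pc_periodic : seq_eq (shift L Pc) Pc.
Proof.
  intro i. pose proof (admissible_length_pos M c Hv). unfold shift, Pc, L in *. apply per_period. auto.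
Qed.

Lemma Pb_bar : seq_eq (seq_bar M Pb) Pc.
Proof.
  intro i. pose proof (admissible_length_pos M c Hv) as HL. fold L in HL.
  unfold seq_bar, Pb, Pc, per. rewrite wbar_length. fold L.
  rewrite wbar_nth by (apply Nat.mod_upper_bound; lia).
  destruct Hv as [_ [Hc _]]. specialize (Hc (i mod L) ltac:(apply Nat.mod_upper_bound; lia)). lia.
Qed.

Lemma Pb_le i : Pb i <= M.
Proof.
  pose proof (admissible_length_pos M c Hv). unfold Pb, per. rewrite wbar_length.
  rewrite wbar_nth by (apply Nat.mod_upper_bound; lia). lia.
Qed.

Lemma tail_le_Pb : seq_le (shift L s) Pb.
Proof.
  pose proof (admissible_length_pos M c Hv) as HL. pose proof (admissible_nonnil M c Hv).
  eapply seq_le_ext; [intro; reflexivity | | apply (seq_le_shift s (right_seq M c) L); [|exact Hle_right]].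
  - intro i. unfold shift. rewrite right_seq_tail by auto. unfold Pb, per. rewrite wbar_length.
    rewrite wbar_nth by (apply Nat.mod_upper_bound; lia). reflexivity.
  - intros i Hi. rewrite Hhead, right_seq_head by (rewrite ?wplus_length; auto). reflexivity.
Qed.

Lemma bar_head : eq_upto (seq_bar M s) (pad (wbar M (wplus c))) L.
Proof.
  intros i Hi. unfold seq_bar, pad. rewrite wbar_nth by (rewrite wplus_length; auto).
  rewrite Hhead by auto. reflexivity.
Qed.

Lemma wbar_wplus_last :
  eq_upto (pad (wbar M (wplus c))) (pad (wbar M c)) (L - 1) /\
  pad (wbar M c) (L - 1) = S (pad (wbar M (wplus c)) (L - 1)).
Proof.
  pose proof (admissible_length_pos M c Hv). pose proof (admissible_nonnil M c Hv).
  destruct Hv as [_ [Hc Hl]]. fold L in Hl, Hc. split.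
  - intros i Hi. unfold pad. rewrite !wbar_nth by (rewrite ?wplus_length; fold L; lia).
    rewrite wplus_nth by auto. fold L. destruct (Nat.eqb_spec i (L - 1)); [lia | reflexivity].
  - unfold pad. rewrite !wbar_nth by (rewrite ?wplus_length; fold L; lia).
    rewrite wplus_nth by auto. fold L. rewrite Nat.eqb_refl. lia.
Qed.

Lemma wplus_last : eq_upto (pad c) (pad (wplus c)) (L - 1) /\ pad (wplus c) (L - 1) = S (pad c (L - 1)).
Proof.
  pose proof (admissible_nonnil M c Hv). split.
  - intros i Hi. unfold pad. rewrite wplus_nth by auto. fold L.
    destruct (Nat.eqb_spec i (L - 1)); [lia | reflexivity].
  - unfold pad. rewrite wplus_nth by auto. fold L. rewrite Nat.eqb_refl. reflexivity.
Qed.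

(* After a block ending in state A the rest of [s] is at most [(bar c)^oo]; after state B it is
   at least [c^oo].  Together with [bar s <= shift s <= s] this pins down the next block. *)
Definition parse_inv (j : nat) : Prop :=
  block_at j = block M c (prev_bit 0 parse_bits j) (parse_bits j) /\
  (parse_bits j = 1 -> seq_le (shift (L * S j) s) Pb) /\
  (parse_bits j = 0 -> seq_le Pc (shift (L * S j) s)).

Lemma shift_block_S j : seq_eq (shift L (shift (L * S j) s)) (shift (L * S (S j)) s).
Proof. intro i. unfold shift. f_equal. lia. Qed.

Lemma parse_inv_0 : parse_inv 0.
Proof.
  split; [|split; [|discriminate]].
  - change (block M c (prev_bit 0 parse_bits 0) (parse_bits 0)) with (wplus c).
    apply block_at_spec; [rewrite wplus_length; auto|].
    intros i Hi. unfold shift. rewrite Nat.mul_0_r. apply Hhead. auto.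
  - intros _. eapply seq_le_ext; [|intro; reflexivity | apply tail_le_Pb].
    intro i. unfold shift. f_equal. lia.
Qed.

Lemma parse_inv_S_one j : parse_inv j -> parse_bits j = 1 -> parse_inv (S j).
Proof.
  intros [_ [HA _]] e. specialize (HA e).
  pose proof (admissible_length_pos M c Hv) as HL.
  set (Z := shift (L * S j) s).
  assert (Hup : le_upto Z (pad (wbar M c)) L).
  { eapply le_upto_ext; [intros i Hi; reflexivity | apply Pb_prefix | apply le_upto_of_seq_le; auto]. }
  assert (Hlo : le_upto (pad (wbar M (wplus c))) Z L).
  { eapply le_upto_ext; [apply bar_head | intros i Hi; reflexivity | apply le_upto_of_seq_le, Hbar_le]. }
  destruct wbar_wplus_last as [Hxy Hl].
  destruct (eq_upto_endpoints _ _ _ L HL Hxy Hl Hlo Hup) as [HX|HY].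
  - assert (Hbw : block_at (S j) = wbar M (wplus c))
      by (apply block_at_spec; [rewrite wbar_length, wplus_length | ]; auto).
    assert (HD : parse_bits (S j) = 0).
    { simpl. rewrite e. simpl. destruct list_eq_dec as [E|E]; auto. exfalso.
      rewrite Hbw in E. rewrite E in Hl. lia. }
    split; [|split; [rewrite HD; discriminate|]].
    + rewrite Hbw, HD. simpl prev_bit. rewrite e. reflexivity.
    + intros _. eapply seq_le_ext; [intro; reflexivity | apply shift_block_S|].
      assert (H1 : seq_le (shift L (seq_bar M s)) (shift L Z)).
      { apply seq_le_shift; [|apply Hbar_le]. eapply eq_upto_trans; [apply bar_head|].
        apply eq_upto_sym. auto. }
      assert (H2 : seq_le (seq_bar M Pb) (seq_bar M (shift L s))).
      { apply seq_le_bar; [|apply tail_le_Pb]. intro i. split; [apply Hsle | apply Pb_le]. }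
      eapply seq_le_trans; [|exact H1].
      eapply seq_le_ext; [apply Pb_bar | intro; reflexivity | exact H2].
  - assert (Hbw : block_at (S j) = wbar M c) by (apply block_at_spec; [rewrite wbar_length|]; auto).
    assert (HD : parse_bits (S j) = 1).
    { simpl. rewrite e. simpl. destruct list_eq_dec as [E|E]; [reflexivity | contradiction]. }
    split; [|split; [|rewrite HD; discriminate]].
    + rewrite Hbw, HD. simpl prev_bit. rewrite e. reflexivity.
    + intros _. eapply seq_le_ext; [apply shift_block_S | apply Pb_periodic|].
      apply seq_le_shift; [|exact HA]. eapply eq_upto_trans; [exact HY|].
      apply eq_upto_sym, Pb_prefix.
Qed.

Lemma parse_inv_S_zero j : parse_inv j -> parse_bits j = 0 -> parse_inv (S j).
Proof.
  intros [_ [_ HB]] e. specialize (HB e).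
  pose proof (admissible_length_pos M c Hv) as HL.
  set (Z := shift (L * S j) s).
  assert (Hlo : le_upto (pad c) Z L).
  { eapply le_upto_ext; [apply Pc_prefix | intros i Hi; reflexivity | apply le_upto_of_seq_le; auto]. }
  assert (Hup : le_upto Z (pad (wplus c)) L).
  { eapply le_upto_ext; [intros i Hi; reflexivity | exact Hhead | apply le_upto_of_seq_le, Hshift_le]. }
  destruct wplus_last as [Hxy Hl].
  destruct (eq_upto_endpoints _ _ _ L HL Hxy Hl Hlo Hup) as [HX|HY].
  - assert (Hbw : block_at (S j) = c) by (apply block_at_spec; auto).
    assert (HD : parse_bits (S j) = 0).
    { simpl. rewrite e. simpl. destruct list_eq_dec as [E|E]; auto. exfalso.
      rewrite Hbw in E. rewrite <- E in Hl. lia. }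
    split; [|split; [rewrite HD; discriminate|]].
    + rewrite Hbw, HD. simpl prev_bit. rewrite e. reflexivity.
    + intros _. eapply seq_le_ext; [apply Pc_periodic | apply shift_block_S|].
      apply seq_le_shift; [|exact HB]. eapply eq_upto_trans; [apply Pc_prefix|].
      apply eq_upto_sym. auto.
  - assert (Hbw : block_at (S j) = wplus c) by (apply block_at_spec; [rewrite wplus_length|]; auto).
    assert (HD : parse_bits (S j) = 1).
    { simpl. rewrite e. simpl. destruct list_eq_dec as [E|E]; [reflexivity | contradiction]. }
    split; [|split; [|rewrite HD; discriminate]].
    + rewrite Hbw, HD. simpl prev_bit. rewrite e. reflexivity.
    + intros _. eapply seq_le_ext; [apply shift_block_S | intro; reflexivity|].
      eapply seq_le_trans; [|apply tail_le_Pb].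
      apply seq_le_shift; [|apply Hshift_le]. eapply eq_upto_trans; [exact HY|].
      apply eq_upto_sym. auto.
Qed.

Lemma parse_inv_all j : parse_inv j.
Proof.
  induction j; [exact parse_inv_0|].
  destruct (Nat.eq_dec (parse_bits j) 1).
  - apply parse_inv_S_one; auto.
  - apply parse_inv_S_zero; auto. pose proof (parse_bits_binary j). lia.
Qed.

Lemma subst_parse_bits : seq_eq s (subst M c 0 parse_bits).
Proof.
  intro i. destruct (block_decomp M c Hv i) as [j [t [Ht ->]]]. fold L in Ht |- *.
  rewrite subst_block by auto. destruct (parse_inv_all j) as [Hb _]. rewrite <- Hb.
  unfold block_at. rewrite nth_map_seq; auto.
Qed.

End Parse.

Lemma fundamental_unit_lift M : 1 <= M -> fundamental M (unit_lift M).
Proof.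
  intros HM. destruct (unit_lift_cases M HM) as [[k [Mk [Hk [Hu _]]]]|[k [Mk [Hu _]]]]; rewrite Hu.
  - split; [repeat constructor; lia|]. right. split; [lia|]. exists k. split; auto. lia.
  - split; [repeat constructor; lia|]. left. split; [simpl; lia|].
    intros i Hi. simpl in Hi. replace i with 1 by lia. simpl. split.
    + right. intros [|[|j]]; unfold pad; simpl; try lia; auto.
    + exists 0. split; [intros; lia|]. unfold pad. simpl. lia.
Qed.

Definition alternating (k j : nat) : nat := if Nat.even j then S k else k.

(* A sequence over {k, k+1} starting with (k+1) k whose 2-shift is smaller must alternate up to
   the first drop, and there its 1-shift falls below its reflection. *)
Lemma alternating_contra k s n : s 0 = S k -> s 1 = k -> (forall j, k <= s j <= S k) ->
  lt_upto (shift 2 s) s n -> seq_le (seq_bar (2 * k + 1) s) (shift 1 s) -> False.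
Proof.
  intros H0 H1 Hr [k0 [Hk0 [Ha Hl]]] Hle.
  assert (Hc : forall j, j <= k0 + 1 -> s j = alternating k j).
  { intro j. induction j as [j IH] using (well_founded_induction lt_wf). intros Hj.
    destruct j as [|[|j]]; auto.
    specialize (Ha j ltac:(lia)). unfold shift in Ha. replace (2 + j) with (S (S j)) in Ha by lia.
    rewrite Ha, IH by lia. unfold alternating. rewrite !Nat.even_succ, Nat.odd_succ. reflexivity. }
  unfold shift in Hl. rewrite (Hc k0) in Hl by lia. pose proof (Hr (2 + k0)).
  assert (Ek : Nat.even k0 = true)
    by (unfold alternating in Hl; destruct (Nat.even k0); auto; lia).
  apply (seq_lt_not_le (shift 1 s) (seq_bar (2 * k + 1) s)); auto.
  apply seq_lt_iff_lt_upto. exists (k0 + 2), (k0 + 1). split; [lia | split].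
  - intros j Hj. unfold shift, seq_bar. rewrite !Hc by lia. unfold alternating.
    replace (1 + j) with (S j) by lia.
    rewrite Nat.even_succ, <- Nat.negb_even. destruct (Nat.even j); simpl; lia.
  - unfold shift, seq_bar. rewrite (Hc (k0 + 1)) by lia. unfold alternating.
    replace (k0 + 1) with (S k0) by lia. rewrite Nat.even_succ, <- Nat.negb_even, Ek. simpl.
    assert (s (1 + S k0) = k).
    { unfold alternating in Hl. rewrite Ek in Hl. replace (1 + S k0) with (2 + k0) by lia. lia. }
    replace (S (S k0)) with (1 + S k0) by lia. lia.
Qed.

Lemma right_seq_unit_lift_lt_letter M a1 : 2 <= M -> M - a1 <= a1 < M -> [a1] <> unit_lift M ->
  seq_lt (right_seq M (unit_lift M)) (per [a1]).
Proof.
  intros HM Ha1 Hne.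
  destruct (unit_lift_cases M ltac:(lia)) as [[k [Mk [Hk [Hu _]]]]|[k [Mk [Hu _]]]];
    rewrite Hu in *; unfold right_seq, pre_per, per.
  - assert (a1 <> k) by (intro; subst; apply Hne; auto).
    destruct (Nat.eq_dec a1 (S k)).
    + subst a1. exists 1. split; [intros [|i] Hi; [reflexivity | lia]|]. simpl. lia.
    + exists 0. split; [intros; lia|]. simpl. lia.
  - destruct (Nat.eq_dec a1 (S k)).
    + subst a1. exists 2. split; [intros [|[|i]] Hi; [reflexivity | reflexivity | lia]|]. simpl. lia.
    + exists 0. split; [intros; lia|]. simpl. lia.
Qed.

(* If a fundamental [a] has [a^oo <= alpha(q_T) = u^+ (bar u)^oo], then [a^oo] parses over the
   graph G into blocks labelled by [u], so [a = u o d] for a fundamental binary word [d]. *)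
Section BelowRightSeqUnitLift.
Variables (M : nat) (a : list nat).
Hypothesis HM : 1 <= M.
Hypothesis Hlen : 2 <= length a.
Hypothesis Hf : Forall (fun x => x <= M) a.
Hypothesis HW : forall i, 1 <= i < length a ->
  lt_upto (shift i (per a)) (per a) (length a - i) /\
  le_upto (seq_bar M (per a)) (shift i (per a)) (length a - i).
Hypothesis Hne : a <> unit_lift M.
Hypothesis Hle : seq_le (per a) (right_seq M (unit_lift M)).

Let u := unit_lift M.
Let L := length u.

Lemma per_head_unit_plus : eq_upto (per a) (pad (wplus u)) L.
Proof.
  pose proof (seq_le_head _ _ Hle) as Hs0t. pose proof (per_range M a Hlen Hf HW) as Hrange.
  pose proof (per_head_gt_half M a Hlen HW) as Hhalf.
  destruct (unit_lift_cases M HM) as [[k [Mk [Hk [Hu _]]]]|[k [Mk [Hu _]]]];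
    unfold L, u in *; rewrite Hu in *; unfold right_seq, pre_per in Hs0t; simpl in Hs0t.
  - intros i Hi. simpl in Hi. replace i with 0 by lia. unfold pad, wplus. simpl. lia.
  - assert (E0 : per a 0 = S k) by lia.
    assert (E1 : per a 1 = S k).
    { pose proof (Hrange 1). destruct (Nat.eq_dec (per a 1) (S k)); auto. exfalso.
      destruct (Nat.eq_dec (length a) 2) as [e2|e2].
      - apply Hne. apply nth_ext with 0 0; [rewrite e2; reflexivity|].
        intros i Hi. rewrite e2 in Hi. rewrite <- per_lt by lia.
        destruct i as [|[|]]; simpl; lia.
      - destruct (HW 2 ltac:(lia)) as [Hw2 _].
        apply (alternating_contra k (per a) (length a - 2)); auto; try lia.
        + intro j. pose proof (Hrange j). lia.
        + rewrite <- Mk. apply per_bar_le_shift; auto. }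
    intros i Hi. simpl in Hi. unfold pad, wplus. destruct i as [|[|]]; simpl; lia.
Qed.

Let D := parse_bits M u (per a).

Lemma per_parse : seq_eq (per a) (subst M u 0 D).
Proof.
  apply subst_parse_bits.
  - exact (admissible_unit_lift M HM).
  - exact (per_le M a Hf).
  - exact (per_shift_le M a Hlen Hf HW).
  - exact (per_bar_le_shift M a Hlen Hf HW).
  - exact Hle.
  - exact per_head_unit_plus.
Qed.

(* For odd [M] the blocks force [s_(2j+1) + s_(2j+2) = M], which fails at an odd period. *)
Lemma unit_lift_divides_length : exists m, length a = L * m.
Proof.
  pose proof (admissible_unit_lift M HM) as Hv. pose proof (per_head_unit_plus) as Hhead.
  destruct (unit_lift_cases M HM) as [[k [Mk [Hk [Hu _]]]]|[k [Mk [Hu _]]]].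
  - exists (length a). unfold L, u. rewrite Hu. simpl. lia.
  - assert (HL2 : L = 2) by (unfold L, u; rewrite Hu; reflexivity).
    destruct (Nat.Even_or_Odd (length a)) as [[r Hr]|[r Hr]]; [exists r; lia | exfalso].
    assert (Hsum : forall j, per a (2 * j + 1) + per a (2 * S j + 0) = M).
    { intro j. rewrite !per_parse. pose proof (parse_bits_binary M u (per a)) as HDb. fold D in HDb.
      rewrite <- HL2, !subst_block by (auto; lia).
      assert (Hpj : prev_bit 0 D j <= 1) by (destruct j; simpl; auto; lia).
      assert (Hune : u <> []) by (unfold u; rewrite Hu; discriminate).
      assert (Hu2 : length u = 2) by exact HL2.
      pose proof (HDb j). pose proof (HDb (S j)).
      rewrite !block_nth by (auto; simpl; lia).
      unfold u. rewrite Hu. simpl nth. simpl length. simpl prev_bit.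
      destruct (prev_bit 0 D j) as [|[|]], (D j) as [|[|]]; simpl; lia. }
    specialize (Hsum r). rewrite <- Hr in Hsum.
    replace (2 * S r + 0) with (length a + 1) in Hsum by lia.
    rewrite per_period in Hsum by lia. rewrite <- (Nat.add_0_r (length a)) in Hsum at 1.
    rewrite per_period in Hsum by lia.
    rewrite (Hhead 0), (Hhead 1) in Hsum by lia. unfold pad, u in Hsum. rewrite Hu in Hsum.
    simpl in Hsum. lia.
Qed.

Let m := length a / L.

Lemma length_eq_blocks : length a = L * m.
Proof.
  pose proof (admissible_length_pos M u (admissible_unit_lift M HM)) as HL.
  destruct unit_lift_divides_length as [m' Hm']. unfold m. rewrite Hm', Nat.mul_comm, Nat.div_mul.
  - lia.
  - unfold L. lia.
Qed.

Lemma parse_last_bit : D (m - 1) = 0.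
Proof.
  pose proof (admissible_unit_lift M HM) as Hv. pose proof (admissible_length_pos M u Hv) as HL.
  pose proof length_eq_blocks as Hm. pose proof (parse_bits_binary M u (per a)) as HDb. fold D in HDb.
  fold L in HL. assert (Hm1 : 1 <= m) by nia.
  destruct (Nat.eq_dec (D (m - 1)) 0) as [|e]; auto. exfalso.
  assert (E : per a (L * m + 0) = per a 0) by (rewrite <- Hm, per_period; auto; lia).
  rewrite per_parse, subst_block in E by auto.
  replace (prev_bit 0 D m) with (D (m - 1)) in E by (destruct m; [lia | simpl; f_equal; lia]).
  rewrite (per_head_unit_plus 0) in E by lia.
  pose proof (admissible_nonnil M u Hv). pose proof (HDb m). pose proof (HDb (m - 1)).
  rewrite block_nth in E by (auto; lia).
  destruct (Nat.eqb_spec (D (m - 1)) 0); [lia|].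
  unfold pad in E. rewrite wplus_nth in E by auto.
  destruct (unit_lift_cases M HM) as [[k [Mk [Hk [Hu _]]]]|[k [Mk [Hu _]]]];
    unfold L, u in *; rewrite Hu in *; simpl in E; lia.
Qed.

Definition parse_word : list nat := map D (seq 0 m).

Lemma compose_parse_word : compose M u parse_word = Some a.
Proof.
  pose proof (admissible_unit_lift M HM) as Hv. pose proof (admissible_length_pos M u Hv) as HL.
  pose proof length_eq_blocks as Hm. fold L in HL.
  assert (Hm1 : 1 <= m) by nia.
  assert (Hbd : binary_word parse_word)
    by (apply binary_word_map; [apply parse_bits_binary | reflexivity | apply parse_last_bit | exact Hm1]).
  assert (Hdn : forall j, j < m -> pad parse_word j = D j) by (intros; apply nth_map_seq; auto).
  destruct (compose_spec M u parse_word (proj1 Hbd) (binary_word_head _ Hbd)) as [a' [E [La Na]]].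
  rewrite E. f_equal. apply nth_ext with 0 0.
  - rewrite La. unfold parse_word. rewrite length_map, length_seq. fold L. lia.
  - intros i Hi. rewrite La in Hi. unfold parse_word in Hi. rewrite length_map, length_seq in Hi.
    destruct (block_decomp M u Hv i) as [J [t [Ht ->]]]. fold L in Ht, Hi |- *.
    assert (J < m) by nia.
    rewrite Na by (unfold parse_word; rewrite ?length_map, ?length_seq; auto).
    rewrite <- (per_lt a (L * J + t)) by lia. rewrite per_parse, subst_block by auto.
    rewrite Hdn by auto. f_equal. f_equal. destruct J; simpl; [reflexivity|]. apply Hdn. lia.
Qed.

(* The windows of [a] at multiples of [L] are windows of [d] under [subst]; the preceding bit
   selects the starting state, i.e. which of the two inequalities transfers. *)
Lemma parse_local_windows i : 1 <= i < m ->
  (D (i - 1) = 0 -> lt_upto (shift i D) D (m - i)) /\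
  (D (i - 1) = 1 -> le_upto (seq_bar 1 D) (shift i D) (m - i)).
Proof.
  intros Hi. pose proof (admissible_unit_lift M HM) as Hv. pose proof (admissible_length_pos M u Hv) as HL.
  pose proof length_eq_blocks as Hm. pose proof (parse_bits_binary M u (per a)) as HDb. fold D in HDb. fold L in HL.
  destruct (HW (L * i) ltac:(nia)) as [W1 W2].
  replace (length a - L * i) with (L * (m - i)) in W1, W2 by nia.
  assert (Hsh : seq_eq (shift (L * i) (per a)) (subst M u (D (i - 1)) (shift i D))).
  { intro j. unfold shift at 1. rewrite per_parse, subst_shift by auto.
    destruct i; [lia|]. simpl. f_equal. f_equal. lia. }
  assert (Hbar : seq_eq (seq_bar M (per a)) (subst M u 1 (seq_bar 1 D))).
  { intro j. unfold seq_bar at 1. rewrite per_parse. symmetry. apply (subst_bar M u Hv 0 D HDb). lia. }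
  assert (Hsb : binary (shift i D)) by (intro j; apply HDb).
  assert (Hbb : binary (seq_bar 1 D)) by (intro j; unfold seq_bar; lia).
  split; intros e; rewrite e in Hsh.
  - apply (lt_upto_of_subst M u Hv 0); auto.
    eapply lt_upto_ext; [intros j _; apply Hsh | intros j _; apply per_parse | exact W1].
  - apply (le_upto_of_subst M u Hv 1); auto.
    eapply le_upto_ext; [intros j _; apply Hbar | intros j _; apply Hsh | exact W2].
Qed.

Lemma parse_word_fundamental : fundamental 1 parse_word.
Proof.
  pose proof (admissible_length_pos M u (admissible_unit_lift M HM)) as HL.
  pose proof length_eq_blocks. fold L in HL.
  apply fundamental1_map; [apply parse_bits_binary | reflexivity | apply parse_last_bit | nia |].
  apply parse_local_windows.
Qed.

End BelowRightSeqUnitLift.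

Theorem right_seq_unit_lift_lt M a : 1 <= M -> fundamental M a -> irreducible M a ->
  a <> unit_lift M -> seq_lt (right_seq M (unit_lift M)) (per a).
Proof.
  intros HM [Hf Hfa] Hirr Hne. apply NNPP. intro Hn. apply seq_not_lt_le in Hn.
  destruct Hfa as [[Hm HW]|[HM2 [a1 [-> Ha1]]]].
  - pose proof (fundamental_windows M a Hm HW) as HW'.
    apply Hirr. exists (unit_lift M), (parse_word M a). split; [apply fundamental_unit_lift; auto|].
    split; [apply parse_word_fundamental | apply compose_parse_word]; auto.
  - exact (seq_lt_not_le _ _ (right_seq_unit_lift_lt_letter M a1 HM2 Ha1 Hne) Hn).
Qed.

(** * Locating the intervals *)

Lemma fundamental1_binary_word b : fundamental 1 b -> binary_word b.
Proof.
  intros [Hf [[Hm HW]|[H _]]]; [|lia].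
  destruct (HW (length b - 1) ltac:(lia)) as [_ H2].
  apply (lt_upto_of_word_lt _ _ 1) in H2; [| rewrite length_skipn; lia | rewrite length_firstn; lia].
  destruct H2 as [k [Hk [_ Hl]]]. replace k with 0 in Hl by lia.
  unfold pad in Hl. rewrite nth_skipn, nth_firstn in Hl. simpl in Hl.
  rewrite Nat.add_0_r in Hl. replace (length b - (length b - 1)) with 1 in Hl by lia. simpl in Hl.
  pose proof (nth_le1_of_Forall b Hf 0). pose proof (nth_le1_of_Forall b Hf (length b - 1)).
  split; [exact Hf | split; lia].
Qed.

Lemma binary_le_ones X : binary X -> seq_le X ones.
Proof. intros H. apply seq_not_lt_le. intros [k [_ Hk]]. specialize (H k). unfold ones in Hk. lia. Qed.

Lemma ones_binary : binary ones.
Proof. intro; unfold ones; lia. Qed.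

Lemma right_seq_binary d : binary_word d -> binary (right_seq 1 d).
Proof.
  intros Hd j. pose proof (binary_word_nonnil d Hd) as Hne.
  destruct (Nat.lt_ge_cases j (length d)).
  - rewrite right_seq_binary_word by auto. destruct (_ =? _); [lia | apply nth_le1_of_Forall, Hd].
  - replace j with (length d + (j - length d)) by lia. rewrite right_seq_tail by auto. lia.
Qed.

Lemma iter_subst10_lt k X Y : binary X -> binary Y -> seq_lt X Y ->
  seq_lt (iter_subst10 k X) (iter_subst10 k Y).
Proof.
  intros HX HY H. induction k; [exact H|]. rewrite !iter_subst10_S.
  apply subst_seq_lt; auto using admissible10, iter_subst10_binary.
Qed.

Lemma iter_subst10_le k X Y : binary X -> binary Y -> seq_le X Y ->
  seq_le (iter_subst10 k X) (iter_subst10 k Y).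
Proof.
  intros HX HY H. induction k; [exact H|]. rewrite !iter_subst10_S.
  apply subst_seq_le; auto using admissible10, iter_subst10_binary.
Qed.

Lemma iter_subst10_right_seq_10 k :
  seq_eq (iter_subst10 k (right_seq 1 [1;0])) (iter_subst10 (S k) ones).
Proof.
  induction k as [|k IH]; intro i.
  - symmetry. apply (subst_ones 1 [1;0] admissible10).
  - rewrite !iter_subst10_S. apply subst_ext; [exact admissible10 | exact IH].
Qed.

Lemma qprime_seq_1 M : 1 <= M -> seq_eq (right_seq M (unit_lift M)) (qprime_seq M 1).
Proof.
  intros HM i. rewrite <- (subst_ones M _ (admissible_unit_lift M HM)).
  apply (subst_unit_lift_ones M 0 HM).
Qed.

Lemma irreducible_left_gt_qT M a x qT : 1 <= M -> fundamental M a -> irreducible M a ->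
  a <> unit_lift M -> is_qL M a x -> is_qprime M 1 qT -> (qT < x)%R.
Proof.
  intros HM Hfa Hirr Hne Hx HqT. apply (is_alpha_lt M qT x _ _ HqT Hx).
  change (seq_lt (qprime_seq M 1) (per a)).
  eapply seq_lt_ext; [apply qprime_seq_1; exact HM | intro; reflexivity|].
  apply right_seq_unit_lift_lt; auto.
Qed.

Lemma n_irreducible_seqs M n a : 1 <= M -> n_irreducible M n a -> exists b,
  fundamental 1 b /\ irreducible 1 b /\
  seq_eq (per a) (subst M (unit_lift M) 0 (iter_subst10 (n - 1) (per b))) /\
  seq_eq (right_seq M a) (subst M (unit_lift M) 0 (iter_subst10 (n - 1) (right_seq 1 b))).
Proof.
  intros HM [b [w [Hb [Hbirr [Hw Hc]]]]]. pose proof (admissible_unit_lift M HM) as Hv.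
  destruct (comp10_iter_spec (n - 1) b w (fundamental1_binary_word b Hb) Hw) as [Hwb [Hpw Hrw]].
  exists b. split; [exact Hb | split; [exact Hbirr | split; intro i]].
  - rewrite (per_compose M _ w a Hv Hwb Hc). apply subst_ext; auto.
  - rewrite (right_seq_compose M _ w a Hv Hwb Hc). apply subst_ext; auto.
Qed.

Lemma qprime_seq_iter M n : 1 <= M -> 1 <= n ->
  seq_eq (subst M (unit_lift M) 0 (iter_subst10 (n - 1) ones)) (qprime_seq M n).
Proof.
  intros HM Hn. replace n with (S (n - 1)) at 2 by lia. apply subst_unit_lift_ones, HM.
Qed.

Lemma n_irreducible_right_le M n a y qn : 1 <= M -> 1 <= n -> n_irreducible M n a ->
  is_qR M a y -> is_qprime M n qn -> (y <= qn)%R.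
Proof.
  intros HM Hn Ha Hy Hqn.
  destruct (n_irreducible_seqs M n a HM Ha) as [b [Hb [_ [_ Hright]]]].
  pose proof (right_seq_binary b (fundamental1_binary_word b Hb)) as Hbin.
  apply (is_alpha_le M y qn _ _ Hy Hqn). change (seq_le (right_seq M a) (qprime_seq M n)).
  eapply seq_le_ext; [intro i; symmetry; apply Hright | apply qprime_seq_iter; auto |].
  apply subst_seq_le; auto using admissible_unit_lift, iter_subst10_binary, ones_binary.
  apply iter_subst10_le; auto using ones_binary, binary_le_ones.
Qed.

Lemma n_irreducible_left_gt M n a x y qn1 : 1 <= M -> 1 <= n -> n_irreducible M n a ->
  is_qL M a x -> is_qR M a y -> is_qprime M (S n) qn1 -> y <> qn1 -> (qn1 < x)%R.
Proof.
  intros HM Hn Ha Hx Hy Hqn1 Hne.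
  destruct (n_irreducible_seqs M n a HM Ha) as [b [Hb [Hbirr [Hper Hright]]]].
  pose proof (fundamental1_binary_word b Hb) as Hbw.
  assert (Hq : seq_eq (subst M (unit_lift M) 0 (iter_subst10 (n - 1) (right_seq 1 [1;0])))
                      (qprime_seq M (S n))).
  { intro i. rewrite (subst_ext M _ (admissible_unit_lift M HM) 0 _ _ (iter_subst10_right_seq_10 _)).
    replace (S (n - 1)) with (S n - 1) by lia. apply qprime_seq_iter; auto. }
  destruct (list_eq_dec Nat.eq_dec b [1;0]) as [->|Hb10].
  - exfalso. apply Hne.
    exact (is_alpha_inj M y qn1 _ _ Hy Hqn1 (fun i => eq_trans (Hright i) (Hq i))).
  - apply (is_alpha_lt M qn1 x _ _ Hqn1 Hx). change (seq_lt (qprime_seq M (S n)) (per a)).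
    eapply seq_lt_ext; [exact Hq | intro i; symmetry; apply Hper|].
    assert (H10 : binary (right_seq 1 [1;0])) by (apply right_seq_binary, (tm_binary_word 1); lia).
    assert (Hpb : binary (per b)) by (apply per_binary, Hbw).
    apply subst_seq_lt; auto using admissible_unit_lift, iter_subst10_binary.
    apply iter_subst10_lt; auto.
    apply (right_seq_unit_lift_lt 1 b); auto.
Qed.

Open Scope R_scope.

Theorem proposition3p2 (M : nat) (HM : (1 <= M)%nat)
  (qG : R) (HqG : is_qL M (unit_lift M) qG)
  (qp : nat -> R) (Hqp : forall n, (1 <= n)%nat -> is_qprime M n (qp n)) :
  (* (a) irreducible intervals other than [qG, qT] lie in I_0 = (qT, M+1], qT = q_1' *)
  (forall a x y, fundamental M a -> irreducible M a ->
     is_qL M a x -> is_qR M a y ->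
     ~ (x = qG /\ y = qp 1%nat) ->
     qp 1%nat < x /\ y <= INR M + 1)
  /\
  (* (b) n-irreducible intervals, except the one with right endpoint q_{n+1}',
     lie in I_n = (q_{n+1}', q_n'] *)
  (forall n a x y, (1 <= n)%nat -> fundamental M a -> n_irreducible M n a ->
     is_qL M a x -> is_qR M a y ->
     y <> qp (S n) ->
     qp (S n) < x /\ y <= qp n).
Proof.
  pose proof (Hqp 1%nat (le_n 1)) as HqT. split.
  - intros a x y Hfa Hirr Hx Hy Hnot. split; [|apply Hy].
    destruct (list_eq_dec Nat.eq_dec a (unit_lift M)) as [->|Hne].
    + exfalso. apply Hnot. split.
      * exact (is_alpha_inj M x qG _ _ Hx HqG (fun i => eq_refl)).
      * exact (is_alpha_inj M y (qp 1%nat) _ _ Hy HqT (qprime_seq_1 M HM)).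
    + exact (irreducible_left_gt_qT M a x (qp 1%nat) HM Hfa Hirr Hne Hx HqT).
  - intros n a x y Hn _ Ha Hx Hy Hne. split.
    + exact (n_irreducible_left_gt M n a x y (qp (S n)) HM Hn Ha Hx Hy (Hqp (S n) ltac:(lia)) Hne).
    + exact (n_irreducible_right_le M n a y (qp n) HM Hn Ha Hy (Hqp n Hn)).
Qed.
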